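(* Let $a<b$, $\alpha\in(0,1)$, fix $n\in\mathbb{N}$ and let $x\in C^n[a,b]$. Then, for $t\in(a,b]$, \begin{multline*} {_aD_t^\alpha} x(t)=\frac{1}{\Gamma(1-\alpha)}(t-a)^{-\alpha}x(t)+\sum_{i=1}^{n-1}A(\alpha,i)(t-a)^{i-\alpha}x^{(i)}(t)\\ +\sum_{p=n}^{\infty}\left[\frac{-\Gamma(p-n+1+\alpha)}{\Gamma(-\alpha)\Gamma(1+\alpha)(p-n+1)!}(t-a)^{-\alpha}x(t)+ B(\alpha,p)(t-a)^{n-1-p-\alpha}V_p(t)\right], \end{multline*} where \[ A(\alpha,i)=\frac{1}{\Gamma(i+1-\alpha)}\left[1+\sum_{p=n-i}^{\infty}\frac{\Gamma(p-n+1+\alpha)}{\Gamma(\alpha-i)(p-n+i+1)!}\right],\quad i=1,\ldots,n-1, \] \[ B(\alpha,p)=\frac{\Gamma(p-n+1+\alpha)}{\Gamma(-\alpha)\Gamma(1+\alpha)(p-n+1)!},\qquad V_p(t)=(p-n+1)\int_a^t (\tau-a)^{p-n}x(\tau)\,d\tau . \]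
   Context: For $\alpha\in(0,1)$ and a function $x$ on $[a,b]$, the left Riemann--Liouville fractional derivative is ${_aD_t^\alpha} x(t)=\frac{1}{\Gamma(1-\alpha)}\frac{d}{dt}\int_a^t (t-\tau)^{-\alpha}x(\tau)\,d\tau$. $\Gamma$ denotes Euler's gamma function. *)

From Stdlib Require Import Reals Factorial.
From Coquelicot Require Import Coquelicot.
Open Scope R_scope.

Fixpoint gauss_prod (z : R) (m : nat) : R :=
  match m with
  | O => z
  | S k => gauss_prod z k * (z + INR (S k))
  end.

(* Euler's Gamma function on R \ {0,-1,-2,...}, via Gauss' limit formula
   Gamma z = lim_m  m! m^z / (z (z+1) ... (z+m)). *)
Definition Gamma (z : R) : R :=
  real (Lim_seq (fun m => INR (fact m) * Rpower (INR m) z / gauss_prod z m)).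

Definition deriv_in (a b : R) (f : R -> R) (s l : R) : Prop :=
  filterlim (fun h => (f (s + h) - f s) / h)
    (within (fun h => h <> 0 /\ a <= s + h <= b) (locally 0)) (locally l).

Definition cont_in (a b : R) (f : R -> R) (s : R) : Prop :=
  filterlim f (within (fun u => a <= u <= b) (locally s)) (locally (f s)).

(* d is the family of derivatives x = d 0, d 1, ..., d n of a function
   x in C^n[a,b]: each d k (k <= n) is continuous on [a,b] and
   d (k+1) is the derivative of d k on [a,b] for k < n. *)
Definition Cn_derivs (a b : R) (n : nat) (x : R -> R) (d : nat -> R -> R) : Prop :=
  (forall s, a <= s <= b -> d O s = x s) /\
  (forall k s, (k < n)%nat -> a <= s <= b -> deriv_in a b (d k) s (d (S k) s)) /\
  (forall k s, (k <= n)%nat -> a <= s <= b -> cont_in a b (d k) s).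

Definition is_Cn (a b : R) (n : nat) (x : R -> R) : Prop :=
  exists d, Cn_derivs a b n x d.

Definition RL_integral (a alpha : R) (x : R -> R) (s : R) : R :=
  RInt_gen (fun tau => Rpower (s - tau) (- alpha) * x tau) (at_point a) (at_left s).

(* l is the left Riemann--Liouville derivative  aD_t^alpha x (t) on [a,b]:
   l = 1/Gamma(1-alpha) * d/dt int_a^t (t-tau)^(-alpha) x(tau) dtau *)
Definition is_RL_deriv (a b alpha : R) (x : R -> R) (t l : R) : Prop :=
  exists D, deriv_in a b (RL_integral a alpha x) t D /\ l = / Gamma (1 - alpha) * D.

(* A(alpha, i) : the series part, indexed by q = p - (n - i) >= 0 *)
Definition A_term (n : nat) (alpha : R) (i q : nat) : R :=
  let p := (q + (n - i))%nat in
  Gamma (INR p - INR n + 1 + alpha) / (Gamma (alpha - INR i) * INR (fact (p + i + 1 - n))).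

Definition A_coef (n : nat) (alpha : R) (i : nat) : R :=
  / Gamma (INR i + 1 - alpha) * (1 + Series (A_term n alpha i)).

Definition B_coef (n : nat) (alpha : R) (p : nat) : R :=
  Gamma (INR p - INR n + 1 + alpha) /
    (Gamma (- alpha) * Gamma (1 + alpha) * INR (fact (p - n + 1))).

Definition V_fun (a : R) (n : nat) (x : R -> R) (p : nat) (t : R) : R :=
  INR (p - n + 1) * RInt (fun tau => (tau - a) ^ (p - n) * x tau) a t.

(* the p-th term of the infinite series, indexed by k = p - n >= 0 *)
Definition main_term (a : R) (n : nat) (alpha : R) (x : R -> R) (t : R) (k : nat) : R :=
  let p := (k + n)%nat in
  - Gamma (INR p - INR n + 1 + alpha) /
      (Gamma (- alpha) * Gamma (1 + alpha) * INR (fact (p - n + 1)))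
    * Rpower (t - a) (- alpha) * x t
  + B_coef n alpha p * Rpower (t - a) (INR n - 1 - INR p - alpha) * V_fun a n x p t.

From Stdlib Require Import Reals Lra Lia Factorial.
From Coquelicot Require Import Coquelicot.
Open Scope R_scope.

(* Only [x'] matters.  With [y = x'] continuous and [x(s) = x(a) + int_a^s y], an integration
   by parts gives
     int_a^t (t - tau)^(-alpha) x(tau) dtau = ((t - a)^(1 - alpha) x(a) + J(t)) / (1 - alpha),
   where J(t) = int_a^t (t - tau)^(1 - alpha) y(tau) dtau.  Expanding
   (1 - w)^(1 - alpha) = sum_j (alpha - 1)_j / j! w^j at w = (tau - a) / (t - a) writes J as a
   series of moments (t - a)^(1 - alpha - j) int_a^t (tau - a)^j y(tau) dtau.  The truncation
   error of the binomial series is at most (alpha)_N / N!, which tends to 0, uniformly on [0, 1)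
   (mean value theorem for P_N(w) (1 - w)^(alpha - 1)); the same bound controls the termwise
   derivatives, so J may be differentiated term by term.  Integrating the moments by parts and
   evaluating the Gamma quotients through Gauss' limit formula yields the stated series; the
   coefficients A(alpha, i) all vanish, since sum_q (alpha - i)_(q+1) / (q+1)! = -1. *)

Fixpoint pochhammer (z : R) (m : nat) : R :=
  match m with O => 1 | S k => pochhammer z k * (z + INR k) end.

Lemma gauss_prod_pochhammer z m : gauss_prod z m = pochhammer z (S m).
Proof.
  induction m as [|m IH]; simpl gauss_prod.
  - simpl; ring.
  - rewrite IH; reflexivity.
Qed.

Lemma pochhammer_shift z m : z * pochhammer (z + 1) m = pochhammer z (S m).
Proof.
  induction m as [|m IH].
  - simpl; ring.
  - change (pochhammer (z + 1) (S m)) with (pochhammer (z + 1) m * (z + 1 + INR m)).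
    change (pochhammer z (S (S m))) with (pochhammer z (S m) * (z + INR (S m))).
    rewrite <- IH, S_INR; ring.
Qed.

Lemma pochhammer_pos z m : 0 < z -> 0 < pochhammer z m.
Proof.
  intros Hz; induction m as [|m IH]; simpl; [lra|].
  apply Rmult_lt_0_compat; [exact IH|]. assert (0 <= INR m) by apply pos_INR. lra.
Qed.

Definition not_pole (z : R) : Prop := forall k : nat, z + INR k <> 0.

Lemma pochhammer_neq0 z m : not_pole z -> pochhammer z m <> 0.
Proof.
  intros Hz; induction m as [|m IH]; simpl; [lra|].
  apply Rmult_integral_contrapositive_currified; auto.
Qed.

Lemma not_pole_add z m : not_pole z -> not_pole (z + INR m).
Proof. intros Hz k. rewrite Rplus_assoc, <- plus_INR. apply Hz. Qed.

Lemma not_pole_neq0 z : not_pole z -> z <> 0.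
Proof. intros Hz. specialize (Hz O). simpl in Hz. lra. Qed.

Lemma not_pole_sub z i : 0 < z < 1 -> not_pole (z - INR i).
Proof.
  intros Hz k. destruct (Compare_dec.le_lt_dec i k) as [H|H].
  - apply le_INR in H. lra.
  - assert (H0 : INR (S k) <= INR i) by (apply le_INR; lia). rewrite S_INR in H0. lra.
Qed.

Definition gauss_seq (z : R) (m : nat) : R :=
  INR (fact m) * Rpower (INR m) z / gauss_prod z m.

Lemma Gamma_unique z (L : R) : is_lim_seq (gauss_seq z) L -> Gamma z = L.
Proof. intros H. unfold Gamma. fold (gauss_seq z). now rewrite (is_lim_seq_unique _ _ H). Qed.

Lemma gauss_seq_shift z m : not_pole z -> (0 < m)%nat ->
  gauss_seq (z + 1) m = gauss_seq z m * (z * INR m / (z + INR m + 1)).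
Proof.
  intros Hz Hm. unfold gauss_seq. rewrite !gauss_prod_pochhammer.
  assert (Hm' : 0 < INR m) by (apply lt_0_INR; lia).
  assert (Hz0 := not_pole_neq0 z Hz).
  assert (Hp := pochhammer_neq0 z (S m) Hz).
  assert (Hzm : z + INR m + 1 <> 0) by (rewrite Rplus_assoc, <- S_INR; apply Hz).
  assert (Hshift : pochhammer (z + 1) (S m) = pochhammer z (S m) * (z + INR m + 1) / z).
  { apply (Rmult_eq_reg_l z); [|exact Hz0]. rewrite pochhammer_shift.
    change (pochhammer z (S (S m))) with (pochhammer z (S m) * (z + INR (S m))).
    rewrite S_INR. field. exact Hz0. }
  rewrite Hshift, Rpower_plus, Rpower_1 by exact Hm'.
  field. repeat split; auto; lra.
Qed.

Lemma is_lim_seq_inv_add_INR c : is_lim_seq (fun m => / (c + INR m)) 0.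
Proof.
  apply (is_lim_seq_inv _ p_infty); [|discriminate].
  apply (is_lim_seq_plus _ _ c p_infty); [apply is_lim_seq_const|apply is_lim_seq_INR|reflexivity].
Qed.

Lemma is_lim_seq_gauss_ratio z : is_lim_seq (fun m => z * INR m / (z + INR m + 1)) z.
Proof.
  destruct (INR_unbounded (Rabs (z + 1))) as [N HN].
  apply is_lim_seq_ext_loc with (fun m => z - z * (z + 1) * / ((z + 1) + INR m)).
  - exists (S N). intros m Hm. assert (INR N < INR m) by (apply lt_INR; lia).
    assert (- (z + 1) <= Rabs (z + 1)) by (rewrite <- Rabs_Ropp; apply Rle_abs).
    field. lra.
  - assert (H := is_lim_seq_minus' _ _ z (z * (z + 1) * 0) (is_lim_seq_const z)
      (is_lim_seq_scal_l _ (z * (z + 1)) 0 (is_lim_seq_inv_add_INR (z + 1)))).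
    now rewrite Rmult_0_r, Rminus_0_r in H.
Qed.

Lemma is_lim_gauss_seq_succ z (L : R) : not_pole z ->
  is_lim_seq (gauss_seq z) L -> is_lim_seq (gauss_seq (z + 1)) (z * L).
Proof.
  intros Hz HL.
  apply is_lim_seq_ext_loc with (fun m => gauss_seq z m * (z * INR m / (z + INR m + 1))).
  - exists 1%nat. intros m Hm. symmetry. apply gauss_seq_shift; auto; lia.
  - rewrite Rmult_comm. apply is_lim_seq_mult'; [exact HL|apply is_lim_seq_gauss_ratio].
Qed.

Lemma is_lim_gauss_seq_pred z (L : R) : not_pole z ->
  is_lim_seq (gauss_seq (z + 1)) L -> is_lim_seq (gauss_seq z) (L / z).
Proof.
  intros Hz HL. assert (Hz0 := not_pole_neq0 z Hz).
  apply is_lim_seq_ext_loc with (fun m => gauss_seq (z + 1) m / (z * INR m / (z + INR m + 1))).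
  - exists 1%nat. intros m Hm. rewrite gauss_seq_shift by (auto; lia).
    assert (0 < INR m) by (apply lt_0_INR; lia).
    assert (z + INR m + 1 <> 0) by (rewrite Rplus_assoc, <- S_INR; apply Hz).
    field. repeat split; auto; lra.
  - apply is_lim_seq_div'; [exact HL|apply is_lim_seq_gauss_ratio|exact Hz0].
Qed.

Lemma is_lim_gauss_seq_add z (L : R) m : not_pole z ->
  is_lim_seq (gauss_seq z) L -> is_lim_seq (gauss_seq (z + INR m)) (L * pochhammer z m).
Proof.
  intros Hz HL. induction m as [|m IH].
  - simpl. now rewrite Rplus_0_r, Rmult_1_r.
  - replace (z + INR (S m)) with ((z + INR m) + 1) by (rewrite S_INR; ring).
    replace (L * pochhammer z (S m)) with ((z + INR m) * (L * pochhammer z m)) by (simpl; ring).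
    apply is_lim_gauss_seq_succ; [apply not_pole_add, Hz|exact IH].
Qed.

Lemma is_lim_gauss_seq_sub z (L : R) m : not_pole z ->
  is_lim_seq (gauss_seq (z + INR m)) L -> is_lim_seq (gauss_seq z) (L / pochhammer z m).
Proof.
  intros Hz. revert L. induction m as [|m IH]; intros L HL.
  - simpl in *. rewrite Rplus_0_r in HL. now replace (L / 1) with L by field.
  - replace (z + INR (S m)) with ((z + INR m) + 1) in HL by (rewrite S_INR; ring).
    apply is_lim_gauss_seq_pred, IH in HL; [|apply not_pole_add, Hz].
    replace (L / pochhammer z (S m)) with (L / (z + INR m) / pochhammer z m); [exact HL|].
    simpl. field. split; [apply Hz|apply pochhammer_neq0, Hz].
Qed.

Lemma Rpower_1_l z : Rpower 1 z = 1.
Proof. unfold Rpower. now rewrite ln_1, Rmult_0_r, exp_0. Qed.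

Lemma Rpower_pos x z : 0 < Rpower x z.
Proof. apply exp_pos. Qed.

Lemma is_derive_Rpower_shift (c e v : R) : 0 < c + v ->
  is_derive (fun v => Rpower (c + v) e) v (e * Rpower (c + v) (e - 1)).
Proof.
  intros H. apply is_derive_Reals.
  rewrite <- Rmult_1_r.
  apply (derivable_pt_lim_comp (fun v => c + v) (fun w => Rpower w e)).
  - rewrite <- (Rplus_0_l 1). apply derivable_pt_lim_plus.
    + apply derivable_pt_lim_const.
    + apply derivable_pt_lim_id.
  - apply derivable_pt_lim_power, H.
Qed.

Lemma Rpower_bernoulli u z : 0 <= u -> 0 <= z <= 1 -> Rpower (1 + u) z <= 1 + z * u.
Proof.
  intros Hu Hz. destruct (Req_dec u 0) as [->|Hu0].
  { rewrite Rplus_0_r, Rpower_1_l. lra. }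
  set (f := fun v => 1 + z * v - Rpower (1 + v) z).
  assert (Hd : forall v, 0 <= v -> is_derive f v (z - z * Rpower (1 + v) (z - 1))).
  { intros v Hv. apply (is_derive_minus (fun v => 1 + z * v) (fun v => Rpower (1 + v) z)).
    - auto_derive; auto. ring.
    - apply is_derive_Rpower_shift. lra. }
  destruct (MVT_gen f 0 u (fun v => z - z * Rpower (1 + v) (z - 1))) as [c [Hc Heq]].
  - intros v Hv. rewrite Rmin_left, Rmax_right in Hv by lra. apply Hd. lra.
  - intros v Hv. rewrite Rmin_left, Rmax_right in Hv by lra.
    apply continuity_pt_filterlim, (ex_derive_continuous f). eexists. apply Hd. lra.
  - rewrite Rmin_left, Rmax_right in Hc by lra.
    assert (Hf0 : f 0 = 0) by (unfold f; rewrite Rplus_0_r, Rpower_1_l; ring).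
    assert (Hp : Rpower (1 + c) (z - 1) <= 1).
    { assert (H0 : Rpower (1 + c) (z - 1) <= Rpower (1 + c) 0) by (apply Rle_Rpower; lra).
      now rewrite Rpower_O in H0 by lra. }
    assert (0 <= z * (1 - Rpower (1 + c) (z - 1))) by (apply Rmult_le_pos; lra).
    assert (0 <= f u) by (rewrite Hf0 in Heq; nra).
    unfold f in *. lra.
Qed.

Lemma gauss_seq_pos z m : 0 < z -> (0 < m)%nat -> 0 < gauss_seq z m.
Proof.
  intros Hz Hm. unfold gauss_seq. rewrite gauss_prod_pochhammer.
  apply Rdiv_lt_0_compat; [|apply pochhammer_pos, Hz].
  apply Rmult_lt_0_compat; [apply lt_0_INR, lt_O_fact|apply Rpower_pos].
Qed.

Lemma Rpower_INR_succ m z : (0 < m)%nat ->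
  Rpower (INR (S m)) z = Rpower (INR m) z * Rpower (1 + / INR m) z.
Proof.
  intros Hm. assert (0 < INR m) by (apply lt_0_INR; lia).
  assert (0 < / INR m) by (apply Rinv_0_lt_compat; lra).
  rewrite Rpower_mult_distr by lra. f_equal. rewrite S_INR. field. lra.
Qed.

Lemma gauss_seq_le_succ z m : 0 < z -> (0 < m)%nat -> gauss_seq z m <= gauss_seq z (S m).
Proof.
  intros Hz Hm.
  assert (Hg := gauss_seq_pos z m Hz Hm).
  assert (HmR : 0 < INR m) by (apply lt_0_INR; lia).
  assert (Hi : 0 < / INR m) by (apply Rinv_0_lt_compat; lra).
  assert (Hrec : gauss_seq z (S m) =
    gauss_seq z m * (INR m + 1) * Rpower (1 + / INR m) z / (z + (INR m + 1))).
  { unfold gauss_seq. rewrite !gauss_prod_pochhammer, Rpower_INR_succ by exact Hm.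
    change (pochhammer z (S (S m))) with (pochhammer z (S m) * (z + INR (S m))).
    rewrite fact_simpl, mult_INR, S_INR.
    assert (0 < pochhammer z (S m)) by (apply pochhammer_pos, Hz).
    field. lra. }
  (* [ln (1 + 1/m) >= 1/(m+1)] turns [exp] into the needed factor *)
  assert (Hq : 1 + z / (INR m + 1) <= Rpower (1 + / INR m) z).
  { unfold Rpower. eapply Rle_trans; [|apply exp_ineq1_le].
    apply Rplus_le_compat_l. unfold Rdiv. apply Rmult_le_compat_l; [lra|].
    assert (Hl := exp_ineq1_le (ln (/ (1 + / INR m)))).
    rewrite exp_ln in Hl by (apply Rinv_0_lt_compat; lra).
    rewrite ln_Rinv in Hl by lra.
    replace (/ (1 + / INR m)) with (1 - / (INR m + 1)) in Hl by (field; lra). lra. }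
  rewrite Hrec. apply Rmult_le_reg_r with (z + (INR m + 1)); [lra|].
  unfold Rdiv. rewrite Rmult_assoc, Rinv_l, Rmult_1_r by lra.
  replace (z + (INR m + 1)) with ((INR m + 1) * (1 + z / (INR m + 1))) by (field; lra).
  rewrite Rmult_assoc. apply Rmult_le_compat_l; [lra|]. apply Rmult_le_compat_l; lra.
Qed.

Lemma Rpower_INR_le_pochhammer z k : 0 <= z <= 1 ->
  Rpower (INR (S k)) z <= pochhammer (z + 1) k / INR (fact k).
Proof.
  intros Hz. induction k as [|k IH].
  - simpl. rewrite Rpower_1_l. lra.
  - rewrite Rpower_INR_succ by lia.
    assert (HkR : 0 < INR (S k)) by (apply lt_0_INR; lia).
    assert (Hb := Rpower_bernoulli (/ INR (S k)) z (Rlt_le _ _ (Rinv_0_lt_compat _ HkR)) Hz).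
    change (pochhammer (z + 1) (S k)) with (pochhammer (z + 1) k * (z + 1 + INR k)).
    rewrite fact_simpl, mult_INR.
    replace (pochhammer (z + 1) k * (z + 1 + INR k) / (INR (S k) * INR (fact k)))
      with ((pochhammer (z + 1) k / INR (fact k)) * (1 + z * / INR (S k))).
    2:{ rewrite S_INR in *. field. split; [apply INR_fact_neq_0|lra]. }
    apply Rmult_le_compat; auto; left; apply Rpower_pos.
Qed.

Lemma gauss_seq_le_inv z k : 0 < z <= 1 -> gauss_seq z (S k) <= / z.
Proof.
  intros Hz. unfold gauss_seq. rewrite gauss_prod_pochhammer, <- pochhammer_shift.
  change (pochhammer (z + 1) (S k)) with (pochhammer (z + 1) k * (z + 1 + INR k)).
  assert (H := Rpower_INR_le_pochhammer z k (conj (Rlt_le _ _ (proj1 Hz)) (proj2 Hz))).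
  assert (Hp : 0 < pochhammer (z + 1) k) by (apply pochhammer_pos; lra).
  assert (Hk := pos_INR k).
  assert (Hf : 0 < INR (fact k)) by (apply lt_0_INR, lt_O_fact).
  rewrite S_INR in H. rewrite fact_simpl, mult_INR, S_INR.
  apply Rle_trans with ((INR k + 1) * INR (fact k) * (pochhammer (z + 1) k / INR (fact k))
                         / (z * (pochhammer (z + 1) k * (z + 1 + INR k)))).
  - unfold Rdiv. apply Rmult_le_compat_r.
    + left. apply Rinv_0_lt_compat. apply Rmult_lt_0_compat; [lra|]. apply Rmult_lt_0_compat; lra.
    + apply Rmult_le_compat_l; [apply Rmult_le_pos; lra|exact H].
  - replace ((INR k + 1) * INR (fact k) * (pochhammer (z + 1) k / INR (fact k))
               / (z * (pochhammer (z + 1) k * (z + 1 + INR k))))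
      with (/ z * ((INR k + 1) / (z + 1 + INR k))) by (field; repeat split; lra).
    rewrite <- (Rmult_1_r (/ z)) at 2. apply Rmult_le_compat_l.
    + left. apply Rinv_0_lt_compat. lra.
    + apply Rmult_le_reg_r with (z + 1 + INR k); [lra|].
      unfold Rdiv. rewrite Rmult_assoc, Rinv_l by lra. lra.
Qed.

Lemma is_lim_gauss_seq_Gamma z : 0 < z <= 1 -> 0 < Gamma z /\ is_lim_seq (gauss_seq z) (Gamma z).
Proof.
  intros Hz.
  destruct (ex_finite_lim_seq_incr (fun k => gauss_seq z (S k)) (/ z)) as [L HL].
  - intros k. apply gauss_seq_le_succ; lia || lra.
  - intros k. apply gauss_seq_le_inv, Hz.
  - apply is_lim_seq_incr_1 in HL. rewrite (Gamma_unique z L HL). split; [|exact HL].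
    assert (Hle : Rbar_le (gauss_seq z 1) L).
    { apply (is_lim_seq_le_loc (fun _ => gauss_seq z 1) (gauss_seq z));
        [|apply is_lim_seq_const|exact HL].
      exists 1%nat. intros k Hk. induction Hk; [lra|].
      eapply Rle_trans; [exact IHHk|]. apply gauss_seq_le_succ; lia || lra. }
    simpl in Hle. assert (0 < gauss_seq z 1) by (apply gauss_seq_pos; lia || lra). lra.
Qed.

Lemma is_lim_gauss_seq_sub_Gamma z i : 0 < z < 1 ->
  is_lim_seq (gauss_seq (z - INR i)) (Gamma z / pochhammer (z - INR i) i).
Proof.
  intros Hz. apply is_lim_gauss_seq_sub; [apply not_pole_sub, Hz|].
  replace (z - INR i + INR i) with z by ring. apply is_lim_gauss_seq_Gamma. lra.
Qed.

Lemma Gamma_shift z i m : 0 < z < 1 ->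
  Gamma (z - INR i + INR m) = Gamma z / pochhammer (z - INR i) i * pochhammer (z - INR i) m.
Proof.
  intros Hz. apply Gamma_unique, is_lim_gauss_seq_add.
  - apply not_pole_sub, Hz.
  - apply is_lim_gauss_seq_sub_Gamma, Hz.
Qed.
Definition pochfact (z : R) (j : nat) : R := pochhammer z j / INR (fact j).

Lemma pochfact_0 z : pochfact z 0 = 1.
Proof. unfold pochfact. simpl. field. Qed.

Lemma pochfact_pos z j : 0 < z -> 0 < pochfact z j.
Proof. intros Hz. apply Rdiv_lt_0_compat; [apply pochhammer_pos, Hz|apply lt_0_INR, lt_O_fact]. Qed.

Lemma pochfact_succ z j : INR (S j) * pochfact z (S j) = pochfact z j * (z + INR j).
Proof.
  unfold pochfact. change (pochhammer z (S j)) with (pochhammer z j * (z + INR j)).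
  rewrite fact_simpl, mult_INR. assert (H := INR_fact_neq_0 j).
  assert (0 < INR (S j)) by (apply lt_0_INR; lia). field. lra.
Qed.

Lemma pochfact_pred z j : pochfact (z - 1) j * (z - 1 + INR j) = (z - 1) * pochfact z j.
Proof.
  unfold pochfact. assert (H := pochhammer_shift (z - 1) j).
  replace (z - 1 + 1) with z in H by ring. simpl in H.
  assert (Hf := INR_fact_neq_0 j).
  transitivity (pochhammer (z - 1) j * (z - 1 + INR j) / INR (fact j)); [field; exact Hf|].
  rewrite <- H. field. exact Hf.
Qed.

Lemma pochfact_pred_succ z j : pochfact (z - 1) (S j) = (z - 1) * pochfact z j / INR (S j).
Proof.
  assert (0 < INR (S j)) by (apply lt_0_INR; lia).
  rewrite <- pochfact_pred, <- (pochfact_succ (z - 1) j). field. lra.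
Qed.

Lemma pochfact_shift z j : INR (S j) * pochfact z (S j) = z * pochfact (z + 1) j.
Proof.
  unfold pochfact. rewrite <- pochhammer_shift, fact_simpl, mult_INR.
  assert (H := INR_fact_neq_0 j). assert (0 < INR (S j)) by (apply lt_0_INR; lia).
  field. lra.
Qed.

Lemma sum_n_pochfact z N : sum_n (pochfact z) N = pochfact (z + 1) N :> R.
Proof.
  induction N as [|N IH].
  - rewrite sum_O, !pochfact_0. reflexivity.
  - rewrite sum_Sn, IH. unfold plus; simpl.
    assert (0 < INR (S N)) by (apply lt_0_INR; lia).
    apply (Rmult_eq_reg_l (INR (S N))); [|lra].
    rewrite Rmult_plus_distr_l, (pochfact_shift z N), (pochfact_succ (z + 1) N), S_INR. ring.
Qed.

Lemma pochfact_succ_pred_sum z N : pochfact z (S N) = pochfact z N + pochfact (z - 1) (S N).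
Proof.
  replace z with (z - 1 + 1) at 1 2 by ring. rewrite <- !sum_n_pochfact, sum_Sn. reflexivity.
Qed.

Lemma pochfact_pred_succ_neg al j : 0 < al < 1 -> pochfact (al - 1) (S j) < 0.
Proof.
  intros Hal. rewrite pochfact_pred_succ.
  assert (Hc := pochfact_pos al j (proj1 Hal)).
  assert (0 < INR (S j)) by (apply lt_0_INR; lia).
  assert (0 < (1 - al) * pochfact al j / INR (S j)) by (apply Rdiv_lt_0_compat; nra).
  replace ((al - 1) * pochfact al j / INR (S j)) with (- ((1 - al) * pochfact al j / INR (S j)))
    by (field; lra).
  lra.
Qed.

Lemma pochfact_succ_le al N : 0 < al < 1 -> pochfact al (S N) <= pochfact al N.
Proof.
  intros Hal. rewrite pochfact_succ_pred_sum. assert (H := pochfact_pred_succ_neg al N Hal). lra.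
Qed.

Lemma is_lim_seq_Rpower_INR e : e < 0 -> is_lim_seq (fun N => Rpower (INR N) e) 0.
Proof.
  intros He. unfold Rpower.
  apply (is_lim_comp_seq (fun y => exp (e * ln y)) INR p_infty 0).
  - apply (is_lim_comp exp (fun y => e * ln y) p_infty 0 m_infty).
    + apply is_lim_exp_m.
    + replace m_infty with (Rbar_mult e p_infty).
      * apply is_lim_scal_l, is_lim_ln_p.
      * unfold Rbar_mult, Rbar_mult'. destruct (Rle_dec 0 e); [exfalso; lra|reflexivity].
    + exists 0. intros y _ . discriminate.
  - exists O. intros n _. discriminate.
  - apply is_lim_seq_INR.
Qed.

Lemma is_lim_seq_INR_ratio w : not_pole w -> is_lim_seq (fun N => INR N / (w + INR N)) 1.
Proof.
  intros Hw.
  apply is_lim_seq_ext with (fun N => 1 - w * / (w + INR N)).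
  - intros N. field. apply Hw.
  - assert (H := is_lim_seq_minus' _ _ 1 (w * 0) (is_lim_seq_const 1)
      (is_lim_seq_scal_l _ w 0 (is_lim_seq_inv_add_INR w))).
    now rewrite Rmult_0_r, Rminus_0_r in H.
Qed.

(* Gauss' formula makes [pochfact w N] behave like [N^(w-1) / Gamma w]. *)
Lemma is_lim_pochfact z i : 0 < z < 1 -> is_lim_seq (pochfact (z - INR i)) 0.
Proof.
  intros Hz. set (w := z - INR i).
  assert (Hw : not_pole w) by apply not_pole_sub, Hz.
  assert (Hw1 : w < 1) by (assert (0 <= INR i) by apply pos_INR; unfold w; lra).
  set (L := Gamma z / pochhammer w i).
  assert (HL : is_lim_seq (gauss_seq w) L) by apply is_lim_gauss_seq_sub_Gamma, Hz.
  assert (HL0 : L <> 0).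
  { destruct (is_lim_gauss_seq_Gamma z) as [Hp _]; [lra|].
    unfold L, Rdiv. apply Rmult_integral_contrapositive_currified; [lra|].
    apply Rinv_neq_0_compat, pochhammer_neq0, Hw. }
  apply is_lim_seq_ext_loc with
    (fun N => Rpower (INR N) (w - 1) * (INR N / (w + INR N)) / gauss_seq w N).
  - exists 1%nat. intros N HN. unfold gauss_seq, pochfact. rewrite gauss_prod_pochhammer.
    change (pochhammer w (S N)) with (pochhammer w N * (w + INR N)).
    assert (HNR : 0 < INR N) by (apply lt_0_INR; lia).
    replace (Rpower (INR N) w) with (Rpower (INR N) (w - 1) * INR N).
    2:{ rewrite <- (Rpower_1 (INR N)) at 2 by exact HNR. rewrite <- Rpower_plus. f_equal. ring. }
    assert (H1 := pochhammer_neq0 w N Hw). assert (H2 := Hw N). assert (H3 := INR_fact_neq_0 N).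
    assert (H4 := Rpower_pos (INR N) (w - 1)).
    field. repeat split; auto; lra.
  - replace 0 with (0 * 1 / L) by (field; exact HL0).
    apply is_lim_seq_div'; [|exact HL|exact HL0]. apply is_lim_seq_mult'.
    + apply is_lim_seq_Rpower_INR. lra.
    + apply is_lim_seq_INR_ratio, Hw.
Qed.

Lemma is_lim_pochfact_0 z : 0 < z < 1 -> is_lim_seq (pochfact z) 0.
Proof. intros Hz. rewrite <- (Rminus_0_r z). exact (is_lim_pochfact z 0 Hz). Qed.

Definition kernel_poly (al : R) (N : nat) (w : R) : R :=
  sum_n (fun j => pochfact (al - 1) j * w ^ j) N.

Definition kernel_poly_deriv (al : R) (N : nat) (w : R) : R :=
  sum_n (fun j => pochfact (al - 1) j * (INR j * w ^ pred j)) N.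

Lemma kernel_poly_succ al N w :
  kernel_poly al (S N) w = kernel_poly al N w + pochfact (al - 1) (S N) * w ^ S N.
Proof. unfold kernel_poly. now rewrite sum_Sn. Qed.

Lemma kernel_poly_0 al N : kernel_poly al N 0 = 1.
Proof.
  induction N as [|N IH].
  - unfold kernel_poly. rewrite sum_O, pochfact_0. simpl. ring.
  - rewrite kernel_poly_succ, IH. simpl. ring.
Qed.

Lemma is_derive_kernel_poly al N w : is_derive (kernel_poly al N) w (kernel_poly_deriv al N w).
Proof.
  induction N as [|N IH].
  - apply (is_derive_ext (fun t => pochfact (al - 1) 0 * t ^ 0)).
    + intros t. unfold kernel_poly. now rewrite sum_O.
    + unfold kernel_poly_deriv. rewrite sum_O. auto_derive; auto. simpl. ring.
  - apply (is_derive_ext (fun t => kernel_poly al N t + pochfact (al - 1) (S N) * t ^ S N)).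
    + intros t. now rewrite kernel_poly_succ.
    + unfold kernel_poly_deriv. rewrite sum_Sn.
      apply (is_derive_plus (kernel_poly al N)); [exact IH|].
      apply is_derive_scal. auto_derive; auto. simpl. ring.
Qed.

(* Truncation of the differential equation [(1 - w) P' + (1 - al) P = 0]
   satisfied by [(1 - w)^(1 - al)]. *)
Lemma kernel_poly_ode al N w :
  (1 - w) * kernel_poly_deriv al N w + (1 - al) * kernel_poly al N w
  = (1 - al) * pochfact al N * w ^ N.
Proof.
  assert (Hcoef : - (INR (S N) * pochfact (al - 1) (S N)) = (1 - al) * pochfact al N).
  { rewrite pochfact_pred_succ. assert (0 < INR (S N)) by (apply lt_0_INR; lia). field. lra. }
  rewrite <- Hcoef. clear Hcoef.
  unfold kernel_poly, kernel_poly_deriv. induction N as [|N IH].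
  - rewrite !sum_O, pochfact_succ, pochfact_0. simpl. ring.
  - rewrite !sum_Sn. unfold plus. cbn -[INR pochfact sum_n].
    replace ((1 - w) * (sum_n (fun j => pochfact (al - 1) j * (INR j * w ^ pred j)) N
                         + pochfact (al - 1) (S N) * (INR (S N) * w ^ N))
             + (1 - al) * (sum_n (fun j => pochfact (al - 1) j * w ^ j) N
                           + pochfact (al - 1) (S N) * (w * w ^ N)))
      with (((1 - w) * sum_n (fun j => pochfact (al - 1) j * (INR j * w ^ pred j)) N
             + (1 - al) * sum_n (fun j => pochfact (al - 1) j * w ^ j) N)
            + (1 - w) * pochfact (al - 1) (S N) * (INR (S N) * w ^ N)
            + (1 - al) * pochfact (al - 1) (S N) * (w * w ^ N)) by ring.
    rewrite IH, (pochfact_succ (al - 1) (S N)), !S_INR. ring.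
Qed.

Lemma is_derive_Rpower_sub (c e z : R) : 0 < c - z ->
  is_derive (fun z => Rpower (c - z) e) z (- (e * Rpower (c - z) (e - 1))).
Proof.
  intros H. apply is_derive_Reals.
  replace (- (e * Rpower (c - z) (e - 1))) with ((e * Rpower (c - z) (e - 1)) * (-1)) by ring.
  apply (derivable_pt_lim_comp (fun z => c - z) (fun w => Rpower w e)).
  - replace (-1) with (0 - 1) by ring. apply derivable_pt_lim_minus.
    + apply derivable_pt_lim_const.
    + apply derivable_pt_lim_id.
  - apply derivable_pt_lim_power, H.
Qed.

Lemma Rpower_pred_mul x e : 0 < x -> Rpower x (e - 1) * x = Rpower x e.
Proof.
  intros Hx. rewrite <- (Rpower_1 x) at 2 by exact Hx. rewrite <- Rpower_plus. f_equal. ring.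
Qed.

Lemma Rpower_opp_mul x e : 0 < x -> Rpower x (- e) * Rpower x e = 1.
Proof. intros Hx. rewrite <- Rpower_plus, Rplus_opp_l. apply Rpower_O, Hx. Qed.

Lemma pow_le_one x N : 0 <= x <= 1 -> x ^ N <= 1.
Proof. intros H. rewrite <- (pow1 N). apply pow_incr. exact H. Qed.

(* Mean value theorem for [kernel_poly al N w * (1 - w)^(al - 1)], whose derivative
   is given by [kernel_poly_ode]. *)
Lemma kernel_poly_mvt al N z : 0 < al < 1 -> 0 < z < 1 ->
  exists xi, 0 <= xi <= z /\
   kernel_poly al N z * Rpower (1 - z) (- (1 - al)) - 1 =
   Rpower (1 - xi) (- (1 - al) - 1) * ((1 - al) * pochfact al N * xi ^ N) * z.
Proof.
  intros Hal Hz.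
  set (psi := fun w => kernel_poly al N w * Rpower (1 - w) (- (1 - al))).
  set (dpsi := fun w => Rpower (1 - w) (- (1 - al) - 1) * ((1 - al) * pochfact al N * w ^ N)).
  assert (Hd : forall w, w < 1 -> is_derive psi w (dpsi w)).
  { intros w Hw. unfold psi, dpsi.
    assert (H := is_derive_mult _ _ w _ _ (is_derive_kernel_poly al N w)
                  (is_derive_Rpower_sub 1 (- (1 - al)) w ltac:(lra)) Rmult_comm).
    eapply is_derive_ext; [intros t; reflexivity|]. 
    replace (Rpower (1 - w) (- (1 - al) - 1) * ((1 - al) * pochfact al N * w ^ N))
      with (plus (mult (kernel_poly_deriv al N w) (Rpower (1 - w) (- (1 - al))))
                 (mult (kernel_poly al N w) (- (- (1 - al) * Rpower (1 - w) (- (1 - al) - 1)))));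
      [exact H|].
    unfold plus, mult; simpl.
    rewrite <- (Rpower_pred_mul (1 - w) (- (1 - al))), <- kernel_poly_ode by lra. ring. }
  destruct (MVT_gen psi 0 z dpsi) as [xi [Hxi Heq]].
  - intros u Hu. rewrite Rmin_left, Rmax_right in Hu by lra. apply Hd. lra.
  - intros u Hu. rewrite Rmin_left, Rmax_right in Hu by lra.
    apply continuity_pt_filterlim, (ex_derive_continuous psi). eexists. apply Hd. lra.
  - rewrite Rmin_left, Rmax_right in Hxi by lra.
    exists xi. split; [exact Hxi|].
    assert (Hp0 : psi 0 = 1).
    { unfold psi. rewrite kernel_poly_0, Rminus_0_r, Rpower_1_l. ring. }
    change (kernel_poly al N z * Rpower (1 - z) (- (1 - al))) with (psi z).
    replace (psi z - 1) with (psi z - psi 0) by now rewrite Hp0.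
    rewrite Heq. unfold dpsi. ring.
Qed.

Lemma kernel_poly_ge al N z : 0 < al < 1 -> 0 <= z < 1 -> Rpower (1 - z) (1 - al) <= kernel_poly al N z.
Proof.
  intros Hal Hz. destruct (Req_dec z 0) as [->|Hz0].
  { rewrite kernel_poly_0, Rminus_0_r, Rpower_1_l. lra. }
  destruct (kernel_poly_mvt al N z Hal ltac:(lra)) as [xi [Hxi Heq]].
  assert (0 < pochfact al N) by (apply pochfact_pos; lra).
  assert (0 <= xi ^ N) by (apply pow_le; lra).
  assert (0 < Rpower (1 - xi) (- (1 - al) - 1)) by apply Rpower_pos.
  assert (Hg : 1 <= kernel_poly al N z * Rpower (1 - z) (- (1 - al))).
  { assert (0 <= (1 - al) * pochfact al N * xi ^ N) by (apply Rmult_le_pos; nra).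
    assert (0 <= Rpower (1 - xi) (- (1 - al) - 1) * ((1 - al) * pochfact al N * xi ^ N) * z)
      by (apply Rmult_le_pos; [apply Rmult_le_pos|]; lra).
    lra. }
  assert (Hr := Rpower_pos (1 - z) (1 - al)).
  apply Rmult_le_compat_r with (r := Rpower (1 - z) (1 - al)) in Hg; [|lra].
  rewrite Rmult_assoc, Rpower_opp_mul in Hg by lra. lra.
Qed.

Lemma kernel_poly_sub_le al N z : 0 < al < 1 -> 0 <= z < 1 ->
  kernel_poly al N z - Rpower (1 - z) (1 - al) <= (1 - al) * pochfact al N / (1 - z).
Proof.
  intros Hal Hz. assert (Hc : 0 < pochfact al N) by (apply pochfact_pos; lra).
  destruct (Req_dec z 0) as [->|Hz0].
  { rewrite kernel_poly_0, Rminus_0_r, Rpower_1_l, Rminus_diag.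
    apply Rdiv_le_0_compat; nra. }
  destruct (kernel_poly_mvt al N z Hal ltac:(lra)) as [xi [Hxi Heq]].
  assert (HR : Rpower (1 - xi) (- (1 - al) - 1) <= Rpower (1 - z) (- (1 - al) - 1)).
  { replace (- (1 - al) - 1) with (- (2 - al)) by ring. rewrite !Rpower_Ropp.
    apply Rinv_le_contravar; [apply Rpower_pos|]. apply Rle_Rpower_l; lra. }
  assert (Hx : xi ^ N <= 1) by (apply pow_le_one; lra).
  assert (Hxp : 0 <= xi ^ N) by (apply pow_le; lra).
  assert (Hr := Rpower_pos (1 - z) (1 - al)).
  assert (Hq := Rpower_pos (1 - xi) (- (1 - al) - 1)).
  assert (Hk : Rpower (1 - z) (1 - al) * Rpower (1 - z) (- (1 - al) - 1) = / (1 - z)).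
  { rewrite <- Rpower_plus. replace (1 - al + (- (1 - al) - 1)) with (Ropp 1) by ring.
    rewrite Rpower_Ropp, Rpower_1 by lra. reflexivity. }
  replace (kernel_poly al N z - Rpower (1 - z) (1 - al))
    with (Rpower (1 - z) (1 - al) * (kernel_poly al N z * Rpower (1 - z) (- (1 - al)) - 1)).
  2:{ rewrite Rmult_minus_distr_l, (Rmult_comm (kernel_poly al N z)), <- Rmult_assoc,
        (Rmult_comm (Rpower (1 - z) (1 - al))), Rpower_opp_mul by lra. ring. }
  rewrite Heq. unfold Rdiv. rewrite <- Hk.
  apply Rle_trans with (Rpower (1 - z) (1 - al) *
    (Rpower (1 - z) (- (1 - al) - 1) * ((1 - al) * pochfact al N * 1) * 1)); [|right; ring].
  assert (0 <= (1 - al) * pochfact al N) by (apply Rmult_le_pos; lra).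
  apply Rmult_le_compat_l; [lra|].
  apply Rmult_le_compat; [apply Rmult_le_pos; [|apply Rmult_le_pos]; lra|lra| |lra].
  apply Rmult_le_compat; [lra|apply Rmult_le_pos; lra|exact HR|].
  apply Rmult_le_compat_l; lra.
Qed.

Lemma kernel_poly_sub_add_le al N k z : 0 < al < 1 -> 0 <= z <= 1 ->
  kernel_poly al N z - kernel_poly al (N + k) z <= pochfact al N - pochfact al (N + k).
Proof.
  intros Hal Hz. induction k as [|k IH].
  - rewrite Nat.add_0_r. lra.
  - rewrite Nat.add_succ_r, kernel_poly_succ, (pochfact_succ_pred_sum al (N + k)).
    assert (Hd := pochfact_pred_succ_neg al (N + k) Hal).
    assert (Hp : z ^ S (N + k) <= 1) by (apply pow_le_one; lra).
    assert (0 <= z ^ S (N + k)) by (apply pow_le; lra).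
    assert (pochfact (al - 1) (S (N + k)) <= pochfact (al - 1) (S (N + k)) * z ^ S (N + k)) by nra.
    lra.
Qed.

(* Combine the two previous bounds at [N + k] and let [k] go to infinity. *)
Lemma kernel_poly_approx al N z : 0 < al < 1 -> 0 <= z < 1 ->
  0 <= kernel_poly al N z - Rpower (1 - z) (1 - al) <= pochfact al N.
Proof.
  intros Hal Hz. split; [assert (H := kernel_poly_ge al N z Hal Hz); lra|].
  set (bound := fun k => pochfact al N - pochfact al (N + k) + (1 - al) * pochfact al (N + k) / (1 - z)).
  assert (Hlim : is_lim_seq (fun k => pochfact al (N + k)) 0).
  { apply (is_lim_seq_ext (fun k => pochfact al (k + N))); [intros k; now rewrite Nat.add_comm|].
    apply (is_lim_seq_incr_n (pochfact al)), is_lim_pochfact_0, Hal. }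
  assert (Hb : is_lim_seq bound (pochfact al N)).
  { assert (H := is_lim_seq_plus' _ _ _ _
      (is_lim_seq_minus' _ _ _ _ (is_lim_seq_const (pochfact al N)) Hlim)
      (is_lim_seq_div' _ _ _ _ (is_lim_seq_scal_l _ (1 - al) _ Hlim) (is_lim_seq_const (1 - z))
         ltac:(lra))).
    now replace (pochfact al N - 0 + (1 - al) * 0 / (1 - z)) with (pochfact al N) in H
      by (field; lra). }
  assert (Hle := is_lim_seq_le (fun _ => kernel_poly al N z - Rpower (1 - z) (1 - al)) bound _ _
    (fun k => ltac:(assert (H1 := kernel_poly_sub_add_le al N k z Hal ltac:(lra));
                    assert (H2 := kernel_poly_sub_le al (N + k) z Hal Hz); unfold bound; lra))
    (is_lim_seq_const _) Hb).
  exact Hle.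
Qed.

Lemma ball_R_iff (c e y : R) : ball c e y <-> Rabs (y - c) < e.
Proof. reflexivity. Qed.

Lemma ball_R_between (c e y : R) : ball c e y -> c - e < y < c + e.
Proof. intros H. apply Rabs_lt_between', H. Qed.

Lemma cont_in_eps a b f s : cont_in a b f s -> forall eps, 0 < eps ->
  exists del, 0 < del /\
    forall u, a <= u <= b -> Rabs (u - s) < del -> Rabs (f u - f s) < eps.
Proof.
  intros H eps Heps.
  apply filterlim_locally with (eps := mkposreal eps Heps) in H.
  destruct H as [del Hd]. exists del. split; [apply cond_pos|].
  intros u Hu Hus. apply Hd; assumption.
Qed.

Lemma is_derive_of_deriv_in a b f s l : deriv_in a b f s l -> a < s < b -> is_derive f s l.
Proof.
  intros H Hs. apply is_derive_Reals. intros eps Heps.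
  apply filterlim_locally with (eps := mkposreal eps Heps) in H.
  destruct H as [del Hd].
  assert (Hp : 0 < Rmin del (Rmin (s - a) (b - s))).
  { apply Rmin_pos; [apply cond_pos|apply Rmin_pos; lra]. }
  exists (mkposreal _ Hp). intros h Hh0 Hh. simpl in Hh.
  assert (H1 := Rmin_l del (Rmin (s - a) (b - s))).
  assert (H2 := Rmin_r del (Rmin (s - a) (b - s))).
  assert (H3 := Rmin_l (s - a) (b - s)). assert (H4 := Rmin_r (s - a) (b - s)).
  apply Hd.
  - apply ball_R_iff. rewrite Rminus_0_r. lra.
  - split; [exact Hh0|]. apply Rabs_lt_between in Hh. lra.
Qed.

Lemma deriv_in_locally_ext a b F G s l : derivable_pt_lim G s l ->
  (exists del, 0 < del /\ forall u, a <= u <= b -> Rabs (u - s) < del -> F u = G u) ->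
  a <= s <= b -> deriv_in a b F s l.
Proof.
  intros HG [del [Hdel HFG]] Hs.
  apply filterlim_locally. intros eps.
  destruct (HG eps (cond_pos eps)) as [del' Hd'].
  assert (Hp : 0 < Rmin del del') by (apply Rmin_pos; [lra|apply cond_pos]).
  exists (mkposreal _ Hp). intros h Hh [Hh0 Hsh]. change R in h.
  assert (Hh' : Rabs h < Rmin del del') by (rewrite <- (Rminus_0_r h); apply Hh). clear Hh.
  assert (H1 := Rmin_l del del'). assert (H2 := Rmin_r del del').
  apply ball_R_iff. rewrite !HFG; auto.
  - apply Hd'; auto. lra.
  - rewrite Rminus_diag, Rabs_R0. lra.
  - replace (s + h - s) with h by ring. lra.
Qed.

Definition clamp (a b s : R) : R := Rmax a (Rmin b s).

Lemma clamp_in a b s : a <= b -> a <= clamp a b s <= b.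
Proof. intros H. unfold clamp, Rmax, Rmin. repeat destruct Rle_dec; lra. Qed.

Lemma clamp_id a b s : a <= s <= b -> clamp a b s = s.
Proof. intros H. unfold clamp, Rmax, Rmin. repeat destruct Rle_dec; lra. Qed.

Lemma clamp_lipschitz a b u v : a <= b -> Rabs (clamp a b u - clamp a b v) <= Rabs (u - v).
Proof.
  intros H. unfold clamp, Rmax, Rmin, Rabs.
  repeat destruct Rle_dec; repeat destruct Rcase_abs; lra.
Qed.

Lemma continuous_clamp_comp a b f s : a <= b -> (forall u, a <= u <= b -> cont_in a b f u) ->
  continuous (fun s => f (clamp a b s)) s.
Proof.
  intros Hab Hf. apply filterlim_locally. intros eps.
  destruct (cont_in_eps a b f (clamp a b s) (Hf _ (clamp_in a b s Hab)) eps (cond_pos eps))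
    as [del [Hd H]].
  exists (mkposreal del Hd). intros u Hu. apply ball_R_iff in Hu. apply ball_R_iff.
  apply H; [apply clamp_in, Hab|].
  eapply Rle_lt_trans; [apply clamp_lipschitz, Hab|exact Hu].
Qed.

(* [u^e] extended by [0] to [u <= 0], so that [u |-> (s - u)^e] is continuous on [R]. *)
Definition pos_power (u e : R) : R := if Rlt_dec 0 u then Rpower u e else 0.

Lemma pos_power_pos u e : 0 < u -> pos_power u e = Rpower u e.
Proof. intros H. unfold pos_power. destruct Rlt_dec; [reflexivity|lra]. Qed.

Lemma pos_power_nonpos u e : u <= 0 -> pos_power u e = 0.
Proof. intros H. unfold pos_power. destruct Rlt_dec; [lra|reflexivity]. Qed.

Lemma continuous_Rpower_l (e x : R) : 0 < x -> continuous (fun u => Rpower u e) x.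
Proof.
  intros Hx. apply (ex_derive_continuous (fun u => Rpower u e)).
  exists (e * Rpower x (e - 1)). apply is_derive_Reals, derivable_pt_lim_power, Hx.
Qed.

Lemma continuous_pos_power e u : 0 < e -> continuous (fun u => pos_power u e) u.
Proof.
  intros He. destruct (Rtotal_order u 0) as [Hn|[H0|Hp]].
  - apply continuous_ext_loc with (fun _ => 0); [|apply continuous_const].
    exists (mkposreal (- u) ltac:(lra)). intros y Hy. change R in y. apply ball_R_between in Hy.
    simpl in Hy. rewrite pos_power_nonpos by lra. reflexivity.
  - subst u. apply filterlim_locally. intros eps.
    exists (mkposreal _ (Rpower_pos eps (/ e))). intros y Hy. change R in y.
    apply ball_R_between in Hy. simpl in Hy. rewrite Rminus_0_l, Rplus_0_l in Hy.
    apply ball_R_iff. rewrite (pos_power_nonpos 0), Rminus_0_r by lra.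
    destruct (Rle_dec y 0) as [Hy0|Hy0].
    + rewrite pos_power_nonpos, Rabs_R0 by lra. apply cond_pos.
    + rewrite pos_power_pos by lra. rewrite Rabs_right by (left; apply Rpower_pos).
      apply Rlt_le_trans with (Rpower (Rpower eps (/ e)) e).
      * apply Rlt_Rpower_l; lra.
      * rewrite Rpower_mult, Rinv_l, Rpower_1 by (apply cond_pos || lra). lra.
  - apply continuous_ext_loc with (fun u => Rpower u e); [|apply continuous_Rpower_l, Hp].
    exists (mkposreal u Hp). intros y Hy. change R in y. apply ball_R_between in Hy.
    simpl in Hy. rewrite pos_power_pos by lra. reflexivity.
Qed.

Lemma is_derive_Rpower_sub_l (a e s : R) : a < s ->
  is_derive (fun s => Rpower (s - a) e) s (e * Rpower (s - a) (e - 1)).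
Proof.
  intros H. apply (is_derive_ext (fun s => Rpower (- a + s) e)); [intros t; f_equal; ring|].
  replace (s - a) with (- a + s) by ring. apply is_derive_Rpower_shift. lra.
Qed.

Lemma is_derive_eq (f : R -> R) s l l' : is_derive f s l -> l = l' -> is_derive f s l'.
Proof. now intros H <-. Qed.

Lemma ex_RInt_continuous_R (f : R -> R) u v : (forall z, continuous f z) -> ex_RInt f u v.
Proof. intros H. apply (ex_RInt_continuous (V := R_CompleteNormedModule)). intros z _. apply H. Qed.

Lemma RInt_ext_R (f g : R -> R) u v :
  (forall z, Rmin u v < z < Rmax u v -> f z = g z :> R) -> RInt f u v = RInt g u v.
Proof. apply RInt_ext. Qed.

Lemma RInt_const_R u v c : RInt (fun _ => c) u v = (v - u) * c.
Proof. apply (RInt_const (V := R_CompleteNormedModule)). Qed.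

Lemma RInt_scal_R (f : R -> R) u v c : ex_RInt f u v -> RInt (fun z => c * f z) u v = c * RInt f u v.
Proof. intros H. apply (RInt_scal (V := R_CompleteNormedModule)), H. Qed.

Lemma RInt_plus_R (f g : R -> R) u v : ex_RInt f u v -> ex_RInt g u v ->
  RInt (fun z => f z + g z) u v = RInt f u v + RInt g u v.
Proof. intros H1 H2. apply (RInt_plus (V := R_CompleteNormedModule)); auto. Qed.

Lemma is_derive_RInt_continuous (f : R -> R) (c s : R) : (forall u, continuous f u) ->
  is_derive (fun s => RInt f c s) s (f s).
Proof.
  intros Hf. apply (is_derive_RInt f (fun s => RInt f c s) c s); [|apply Hf].
  apply filter_forall. intros u. apply (RInt_correct (V := R_CompleteNormedModule)).
  apply ex_RInt_continuous_R, Hf.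
Qed.

Lemma Rpower_sub_INR T e j : 0 < T -> Rpower T (e - INR j) = Rpower T e / T ^ j.
Proof.
  intros HT. unfold Rminus. rewrite Rpower_plus, Rpower_Ropp, Rpower_pow by exact HT. reflexivity.
Qed.

Lemma Rpower_sub_INR_mul T e j : 0 < T -> Rpower T (e - INR j) * T ^ j = Rpower T e.
Proof. intros HT. rewrite Rpower_sub_INR by exact HT. field. apply pow_nonzero. lra. Qed.

Lemma is_lim_seq_of_bound (u v : nat -> R) (l c : R) :
  (forall N, Rabs (u N - l) <= c * v N) -> is_lim_seq v 0 -> is_lim_seq u l.
Proof.
  intros H Hv. apply is_lim_seq_Reals. apply is_lim_seq_Reals in Hv.
  intros eps Heps. assert (Hc := Rabs_pos c).
  destruct (Hv (eps / (Rabs c + 1))) as [N HN]; [apply Rdiv_lt_0_compat; lra|].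
  exists N. intros n Hn. specialize (HN n Hn). unfold Rdist in *. rewrite Rminus_0_r in HN.
  eapply Rle_lt_trans; [apply H|].
  apply Rle_lt_trans with ((Rabs c + 1) * Rabs (v n)).
  - eapply Rle_trans; [apply Rle_abs|]. rewrite Rabs_mult.
    apply Rmult_le_compat_r; [apply Rabs_pos|lra].
  - apply (Rmult_lt_compat_l (Rabs c + 1)) in HN; [|lra].
    replace ((Rabs c + 1) * (eps / (Rabs c + 1))) with eps in HN by (field; lra). lra.
Qed.

Lemma sum_n_pochfact_weights al C N :
  sum_n (fun j => C * (- pochfact (al - 1) (S j))) N = C * (1 - pochfact al (S N)) :> R.
Proof.
  induction N as [|N IH].
  - rewrite sum_O, (pochfact_succ_pred_sum al 0), pochfact_0. ring.
  - rewrite sum_Sn, IH, (pochfact_succ_pred_sum al (S N)). unfold plus; simpl. ring.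
Qed.

(* The weights [- pochfact (al - 1) (S j)] are positive and telescope to [1],
   with tails [pochfact al (S N)]. *)
Lemma series_dominated_tail al (u : nat -> R) C : 0 < al < 1 -> 0 <= C ->
  (forall j, Rabs (u j) <= C * (- pochfact (al - 1) (S j))) ->
  ex_series u /\ forall N, Rabs (Series u - sum_n u N) <= C * pochfact al (S N).
Proof.
  intros Hal HC Hu.
  assert (Hlim : is_lim_seq (fun N => pochfact al (S N)) 0).
  { apply (is_lim_seq_incr_1 (pochfact al)).
    apply is_lim_pochfact_0, Hal. }
  assert (Hex : ex_series u).
  { apply (ex_series_le u (fun j => C * (- pochfact (al - 1) (S j)))); [exact Hu|].
    exists (C * (1 - 0)).
    assert (H : is_lim_seq (sum_n (fun j => C * (- pochfact (al - 1) (S j)))) (C * (1 - 0))).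
    { apply (is_lim_seq_ext (fun N => C * (1 - pochfact al (S N)))).
      - intros N. symmetry. apply sum_n_pochfact_weights.
      - apply (is_lim_seq_scal_l _ C (1 - 0)).
        apply is_lim_seq_minus'; [apply is_lim_seq_const|exact Hlim]. }
    exact H. }
  split; [exact Hex|]. intros N.
  assert (Hpart : forall k, Rabs (sum_n u (N + k) - sum_n u N)
                            <= C * (pochfact al (S N) - pochfact al (S (N + k)))).
  { induction k as [|k IH].
    - rewrite Nat.add_0_r, Rminus_diag, Rabs_R0, Rminus_diag. lra.
    - rewrite Nat.add_succ_r, sum_Sn. unfold plus; simpl.
      replace (sum_n u (N + k) + u (S (N + k)) - sum_n u N)
        with ((sum_n u (N + k) - sum_n u N) + u (S (N + k))) by ring.
      eapply Rle_trans; [apply Rabs_triang|].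
      rewrite (pochfact_succ_pred_sum al (S (N + k))).
      specialize (Hu (S (N + k))). lra. }
  assert (HL : is_lim_seq (fun k => sum_n u (N + k)) (Series u)).
  { apply (is_lim_seq_ext (fun k => sum_n u (k + N))); [intros k; now rewrite Nat.add_comm|].
    apply (is_lim_seq_incr_n (sum_n u) N), Series_correct, Hex. }
  assert (HL2 := is_lim_seq_abs _ _ (is_lim_seq_minus' _ _ _ _ HL (is_lim_seq_const (sum_n u N)))).
  assert (Hb : forall k, Rabs (sum_n u (N + k) - sum_n u N) <= C * pochfact al (S N)).
  { intros k. eapply Rle_trans; [apply Hpart|].
    assert (0 <= C * pochfact al (S (N + k))) by (apply Rmult_le_pos; [|left; apply pochfact_pos]; lra).
    lra. }
  exact (is_lim_seq_le _ _ _ _ Hb HL2 (is_lim_seq_const _)).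
Qed.

Section RL_derivative_C1.

Variables (a b al : R) (x y : R -> R).
Hypothesis Hab : a < b.
Hypothesis Hal : 0 < al < 1.
Hypothesis x_cont : forall s, a <= s <= b -> cont_in a b x s.
Hypothesis x_deriv : forall s, a < s < b -> is_derive x s (y s).
Hypothesis y_cont : forall s, a <= s <= b -> cont_in a b y s.

(* Extending [y] by constants outside [a, b] lets us work with functions continuous on [R]. *)
Definition y_ext (s : R) : R := y (clamp a b s).

Definition x_int (s : R) : R := x a + RInt y_ext a s.

Definition moment (j : nat) (s : R) : R := RInt (fun u => (u - a) ^ j * y_ext u) a s.

Lemma continuous_y_ext s : continuous y_ext s.
Proof. apply continuous_clamp_comp; [lra|exact y_cont]. Qed.

Lemma y_ext_bounded : exists K, 0 <= K /\ forall s, Rabs (y_ext s) <= K.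
Proof.
  destruct (continuity_ab_maj (fun s => Rabs (y_ext s)) a b) as [M [HM _]]; [lra| |].
  { intros c _. apply continuity_pt_filterlim.
    apply (continuous_comp y_ext Rabs); [apply continuous_y_ext|apply continuous_Rabs]. }
  exists (Rabs (y_ext M)). split; [apply Rabs_pos|]. intros s.
  replace (y_ext s) with (y_ext (clamp a b s)); [apply HM, clamp_in; lra|].
  unfold y_ext. rewrite (clamp_id a b (clamp a b s)); [reflexivity|apply clamp_in; lra].
Qed.

Lemma continuous_moment_integrand j s : continuous (fun u => (u - a) ^ j * y_ext u) s.
Proof.
  apply (continuous_mult (fun u => (u - a) ^ j) y_ext); [|apply continuous_y_ext].
  apply (ex_derive_continuous (fun u => (u - a) ^ j)). auto_derive. auto.
Qed.

Lemma is_derive_x_int s : is_derive x_int s (y_ext s).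
Proof.
  unfold x_int. rewrite <- (Rplus_0_l (y_ext s)).
  apply (is_derive_plus (fun _ => x a) (fun s => RInt y_ext a s)).
  - apply is_derive_Reals, derivable_pt_lim_const.
  - apply is_derive_RInt_continuous, continuous_y_ext.
Qed.

Lemma continuous_x_int s : continuous x_int s.
Proof. apply (ex_derive_continuous x_int). eexists. apply is_derive_x_int. Qed.

Lemma is_derive_moment j s : is_derive (moment j) s ((s - a) ^ j * y_ext s).
Proof.
  apply (is_derive_RInt_continuous (fun u => (u - a) ^ j * y_ext u)).
  apply continuous_moment_integrand.
Qed.

(* Mean value theorem for [x o clamp - x_int], continuous on [R] with derivative [0] on (a, b). *)
Lemma x_eq_x_int s : a <= s <= b -> x s = x_int s.
Proof.
  intros Hs. destruct (Req_dec s a) as [->|Hsa].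
  { unfold x_int. rewrite RInt_point. unfold zero; simpl. ring. }
  set (D := fun u => x (clamp a b u) - x_int u).
  assert (HD : forall u, a < u < b -> is_derive D u 0).
  { intros u Hu. unfold D. replace 0 with (y_ext u - y_ext u) by ring.
    apply (is_derive_minus (fun u => x (clamp a b u)) x_int); [|apply is_derive_x_int].
    unfold y_ext. rewrite clamp_id by lra.
    apply (is_derive_ext_loc x); [|apply x_deriv, Hu].
    assert (Hr : 0 < Rmin (u - a) (b - u)) by (apply Rmin_pos; lra).
    exists (mkposreal _ Hr). intros v Hv. apply ball_R_between in Hv. simpl in Hv.
    assert (H1 := Rmin_l (u - a) (b - u)). assert (H2 := Rmin_r (u - a) (b - u)).
    rewrite clamp_id by lra. reflexivity. }
  assert (HDc : forall u, continuous D u).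
  { intros u. apply (continuous_minus (fun u => x (clamp a b u)) x_int).
    - apply continuous_clamp_comp; [lra|exact x_cont].
    - apply continuous_x_int. }
  destruct (MVT_gen D a s (fun _ => 0)) as [c [_ Heq]].
  - intros u Hu. rewrite Rmin_left, Rmax_right in Hu by lra. apply HD. lra.
  - intros u _. apply continuity_pt_filterlim, HDc.
  - unfold D in Heq. rewrite !clamp_id in Heq by lra.
    unfold x_int at 2 in Heq. rewrite RInt_point in Heq. unfold zero in Heq; simpl in Heq. lra.
Qed.

Definition frac_int (s : R) : R := RInt (fun u => pos_power (s - u) (1 - al) * y_ext u) a s.

Lemma continuous_frac_int_integrand s u :
  continuous (fun u => pos_power (s - u) (1 - al) * y_ext u) u.
Proof.
  apply (continuous_mult (fun u => pos_power (s - u) (1 - al)) y_ext); [|apply continuous_y_ext].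
  apply (continuous_comp (fun u => s - u) (fun v => pos_power v (1 - al))).
  - apply (ex_derive_continuous (fun u => s - u)). auto_derive. auto.
  - apply continuous_pos_power. lra.
Qed.

(* An antiderivative of [u |-> (s - u)^(-al) x u] on [(-oo, s)], by integration by parts. *)
Definition RL_primitive (s u : R) : R :=
  / (1 - al) * (- (pos_power (s - u) (1 - al) * x_int u)
                + RInt (fun u => pos_power (s - u) (1 - al) * y_ext u) a u).

Lemma is_derive_RL_primitive s u : u < s ->
  is_derive (RL_primitive s) u (Rpower (s - u) (- al) * x_int u).
Proof.
  intros Hus.
  apply is_derive_ext_loc with (fun u => / (1 - al) * (- (Rpower (s - u) (1 - al) * x_int u)
                + RInt (fun u => pos_power (s - u) (1 - al) * y_ext u) a u)).
  { exists (mkposreal (s - u) ltac:(lra)). intros v Hv. apply ball_R_between in Hv.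
    simpl in Hv. unfold RL_primitive. rewrite pos_power_pos by lra. reflexivity. }
  assert (H := is_derive_scal _ _ (/ (1 - al)) _
    (is_derive_plus _ _ _ _ _
      (is_derive_opp _ _ _
        (is_derive_mult _ _ u _ _ (is_derive_Rpower_sub s (1 - al) u ltac:(lra))
          (is_derive_x_int u) Rmult_comm))
      (is_derive_RInt_continuous _ a u (continuous_frac_int_integrand s)))).
  eapply is_derive_ext; [intros t; reflexivity|].
  replace (Rpower (s - u) (- al) * x_int u) with
    (scal (/ (1 - al)) (plus (opp (plus (mult (- ((1 - al) * Rpower (s - u) (1 - al - 1))) (x_int u))
                                         (mult (Rpower (s - u) (1 - al)) (y_ext u))))
                             (pos_power (s - u) (1 - al) * y_ext u))); [exact H|].
  unfold scal, plus, mult, opp; simpl. unfold mult; simpl.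
  rewrite pos_power_pos by lra. replace (1 - al - 1) with (- al) by ring.
  field. lra.
Qed.

Lemma continuous_RL_primitive s u : continuous (RL_primitive s) u.
Proof.
  unfold RL_primitive.
  apply (continuous_scal_r (/ (1 - al)) (fun u => - (pos_power (s - u) (1 - al) * x_int u)
    + RInt (fun u => pos_power (s - u) (1 - al) * y_ext u) a u)).
  apply (continuous_plus (fun u => - (pos_power (s - u) (1 - al) * x_int u))).
  - apply (continuous_opp (fun u => pos_power (s - u) (1 - al) * x_int u)).
    apply (continuous_mult (fun u => pos_power (s - u) (1 - al)) x_int); [|apply continuous_x_int].
    apply (continuous_comp (fun u => s - u) (fun v => pos_power v (1 - al))).
    + apply (ex_derive_continuous (fun u => s - u)). auto_derive. auto.
    + apply continuous_pos_power. lra.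
  - apply (ex_derive_continuous (fun u => RInt (fun u => pos_power (s - u) (1 - al) * y_ext u) a u)).
    eexists. apply is_derive_RInt_continuous, continuous_frac_int_integrand.
Qed.

Lemma filter_prod_at_point_at_left (P : R -> Prop) s : a < s -> (forall z, a < z < s -> P z) ->
  filter_prod (at_point a) (at_left s)
    (fun ab => forall z, Rmin (fst ab) (snd ab) < z < Rmax (fst ab) (snd ab) -> P z).
Proof.
  intros Has HP. apply (Filter_prod _ _ _ (fun u => u = a) (fun u => a < u < s)).
  - reflexivity.
  - exists (mkposreal (s - a) ltac:(lra)). intros v Hv Hvs. apply ball_R_between in Hv.
    simpl in Hv. lra.
  - intros u v -> [Hv1 Hv2] z Hz. simpl in Hz.
    rewrite Rmin_left, Rmax_right in Hz by lra. apply HP. lra.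
Qed.

Lemma filter_prod_at_point_at_left_closed (P : R -> Prop) s : a < s -> (forall z, a <= z < s -> P z) ->
  filter_prod (at_point a) (at_left s)
    (fun ab => forall z, Rmin (fst ab) (snd ab) <= z <= Rmax (fst ab) (snd ab) -> P z).
Proof.
  intros Has HP. apply (Filter_prod _ _ _ (fun u => u = a) (fun u => a < u < s)).
  - reflexivity.
  - exists (mkposreal (s - a) ltac:(lra)). intros v Hv Hvs. apply ball_R_between in Hv.
    simpl in Hv. lra.
  - intros u v -> [Hv1 Hv2] z Hz. simpl in Hz.
    rewrite Rmin_left, Rmax_right in Hz by lra. apply HP. lra.
Qed.

Lemma RL_integral_eq s : a < s <= b ->
  RL_integral a al x s = / (1 - al) * (x a * Rpower (s - a) (1 - al) + frac_int s).
Proof.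
  intros Hs.
  assert (HD : forall u, u < s -> Derive (RL_primitive s) u = Rpower (s - u) (- al) * x_int u).
  { intros u Hu. apply is_derive_unique, is_derive_RL_primitive, Hu. }
  assert (Hgen : is_RInt_gen (Derive (RL_primitive s)) (at_point a) (at_left s)
                   (RL_primitive s s - RL_primitive s a)).
  { apply is_RInt_gen_Derive.
    - apply filter_prod_at_point_at_left_closed; [lra|].
      intros z Hz. eexists. apply is_derive_RL_primitive. lra.
    - apply filter_prod_at_point_at_left_closed; [lra|]. intros z Hz.
      apply continuous_ext_loc with (fun v => Rpower (s - v) (- al) * x_int v).
      + exists (mkposreal (s - z) ltac:(lra)). intros v Hv. apply ball_R_between in Hv.
        simpl in Hv. symmetry. apply HD. lra.
      + apply (continuous_mult (fun v => Rpower (s - v) (- al)) x_int); [|apply continuous_x_int].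
        apply (ex_derive_continuous (fun v => Rpower (s - v) (- al))). eexists.
        apply is_derive_Rpower_sub. lra.
    - intros P HP. exact (locally_singleton _ _ HP).
    - apply (filterlim_filter_le_1 (F := locally s)); [apply filter_le_within|].
      apply continuous_RL_primitive. }
  apply (is_RInt_gen_ext _ (fun u => Rpower (s - u) (- al) * x u)) in Hgen.
  2:{ apply filter_prod_at_point_at_left; [lra|]. intros z Hz.
      rewrite HD, x_eq_x_int by lra. reflexivity. }
  unfold RL_integral. rewrite (is_RInt_gen_unique _ _ Hgen).
  unfold RL_primitive, frac_int, x_int.
  rewrite Rminus_diag, pos_power_nonpos, pos_power_pos, !RInt_point by lra.
  unfold zero; simpl. field. lra.
Qed.

Definition frac_int_approx (N : nat) (s : R) : R :=
  sum_n (fun j => pochfact (al - 1) j * Rpower (s - a) (1 - al - INR j) * moment j s) N.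

Lemma continuous_frac_int_approx_integrand N s z : a < s ->
  continuous (fun u => Rpower (s - a) (1 - al) * kernel_poly al N ((u - a) / (s - a)) * y_ext u) z.
Proof.
  intros Hs.
  apply (continuous_mult (fun u => Rpower (s - a) (1 - al) * kernel_poly al N ((u - a) / (s - a))));
    [|apply continuous_y_ext].
  apply (ex_derive_continuous (fun u => Rpower (s - a) (1 - al) * kernel_poly al N ((u - a) / (s - a)))).
  eexists. apply is_derive_scal.
  apply (is_derive_comp (kernel_poly al N) (fun u => (u - a) / (s - a))).
  - apply is_derive_kernel_poly.
  - auto_derive; [lra|reflexivity].
Qed.

(* Substituting [u = a + (s - a) w] turns [frac_int_approx N] into the integral of [frac_int]
   with the kernel [(1 - w)^(1 - al)] replaced by [kernel_poly al N w]. *)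
Lemma frac_int_approx_eq_RInt N s : a < s ->
  frac_int_approx N s =
  RInt (fun u => Rpower (s - a) (1 - al) * kernel_poly al N ((u - a) / (s - a)) * y_ext u) a s.
Proof.
  intros Hs.
  assert (Hterm : forall j, pochfact (al - 1) j * Rpower (s - a) (1 - al - INR j) * moment j s =
    RInt (fun u => Rpower (s - a) (1 - al) * (pochfact (al - 1) j * ((u - a) / (s - a)) ^ j)
                   * y_ext u) a s).
  { intros j. unfold moment. rewrite <- RInt_scal_R.
    2:{ apply ex_RInt_continuous_R, continuous_moment_integrand. }
    apply RInt_ext_R. intros z _.
    rewrite Rpower_sub_INR by lra. unfold Rdiv. rewrite Rpow_mult_distr, pow_inv. ring. }
  unfold frac_int_approx. induction N as [|N IH].
  - rewrite sum_O, Hterm. apply RInt_ext_R. intros z _. unfold kernel_poly. now rewrite sum_O.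
  - rewrite sum_Sn, IH, Hterm. unfold plus; simpl. rewrite <- RInt_plus_R.
    + apply RInt_ext_R. intros z _. rewrite kernel_poly_succ. cbn [pow]. ring.
    + apply ex_RInt_continuous_R. intros z. apply continuous_frac_int_approx_integrand, Hs.
    + apply ex_RInt_continuous_R. intros z.
      set (m := fun z => Rpower (s - a) (1 - al) * (pochfact (al - 1) (S N) * ((z - a) / (s - a)) ^ S N)).
      apply (continuous_mult m y_ext); [|apply continuous_y_ext].
      apply (ex_derive_continuous m). unfold m. auto_derive. lra.
Qed.

Lemma frac_int_approx_bound N s K : a < s -> (forall u, Rabs (y_ext u) <= K) ->
  Rabs (frac_int s - frac_int_approx N s) <= (s - a) * (Rpower (s - a) (1 - al) * pochfact al N * K).
Proof.
  intros Hs HK. rewrite frac_int_approx_eq_RInt by exact Hs. unfold frac_int.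
  set (f := fun u => pos_power (s - u) (1 - al) * y_ext u).
  set (g := fun u => Rpower (s - a) (1 - al) * kernel_poly al N ((u - a) / (s - a)) * y_ext u).
  assert (Hf : forall z, continuous f z) by apply continuous_frac_int_integrand.
  assert (Hg : forall z, continuous g z) by (intros; apply continuous_frac_int_approx_integrand, Hs).
  assert (Hfg : forall z, continuous (fun z => f z - g z) z).
  { intros z. apply (continuous_minus f g); auto. }
  rewrite <- (RInt_minus (V := R_CompleteNormedModule)) by (apply ex_RInt_continuous_R; auto).
  eapply Rle_trans; [apply abs_RInt_le; [lra|apply ex_RInt_continuous_R, Hfg]|].
  rewrite <- RInt_const_R.
  apply RInt_le; [lra| |apply ex_RInt_continuous_R; intros; apply continuous_const|].
  { apply ex_RInt_continuous_R. intros z.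
    apply (continuous_comp (fun z => f z - g z) Rabs); [apply Hfg|apply continuous_Rabs]. }
  intros z Hz. unfold minus, plus, opp, scal; simpl. unfold mult; simpl. unfold f, g.
  set (T := s - a). set (w := (z - a) / T).
  assert (HT : 0 < T) by (unfold T; lra).
  assert (Hw : 0 <= w < 1).
  { unfold w. split; [apply Rdiv_le_0_compat; lra|].
    apply Rmult_lt_reg_r with T; [exact HT|]. unfold Rdiv. rewrite Rmult_assoc, Rinv_l; unfold T; lra. }
  rewrite pos_power_pos by lra.
  replace (s - z) with (T * (1 - w)) by (unfold w, T; field; lra).
  rewrite <- Rpower_mult_distr by lra.
  replace (Rpower T (1 - al) * Rpower (1 - w) (1 - al) * y_ext z
           + - (Rpower T (1 - al) * kernel_poly al N w * y_ext z))
    with (Rpower T (1 - al) * (Rpower (1 - w) (1 - al) - kernel_poly al N w) * y_ext z) by ring.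
  rewrite !Rabs_mult, (Rabs_right (Rpower T (1 - al))) by (left; apply Rpower_pos).
  assert (Hkb := kernel_poly_approx al N w Hal Hw).
  assert (Hp := Rpower_pos T (1 - al)).
  apply Rmult_le_compat; [apply Rmult_le_pos; [lra|apply Rabs_pos]|apply Rabs_pos| |apply HK].
  apply Rmult_le_compat_l; [lra|]. rewrite Rabs_minus_sym, Rabs_right; lra.
Qed.

Definition RL_term (s : R) (j : nat) : R :=
  pochfact al j * Rpower (s - a) (- al - INR j) * moment j s.

Definition frac_int_approx_deriv (N : nat) (s : R) : R :=
  (1 - al) * sum_n (RL_term s) N + pochfact al N * Rpower (s - a) (1 - al) * y_ext s.

Lemma is_derive_frac_int_approx N s : a < s ->
  is_derive (frac_int_approx N) s (frac_int_approx_deriv N s).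
Proof.
  intros Hs.
  assert (Hterm : forall j,
    is_derive (fun s => pochfact (al - 1) j * Rpower (s - a) (1 - al - INR j) * moment j s) s
      ((1 - al) * RL_term s j + pochfact (al - 1) j * Rpower (s - a) (1 - al) * y_ext s)).
  { intros j.
    assert (H := is_derive_scal _ _ (pochfact (al - 1) j) _
      (is_derive_mult _ _ s _ _ (is_derive_Rpower_sub_l a (1 - al - INR j) s Hs)
                                (is_derive_moment j s) Rmult_comm)).
    eapply is_derive_eq; [eapply is_derive_ext; [|exact H]|].
    { intros t. unfold mult; simpl. ring. }
    unfold mult, plus, scal; simpl. unfold mult; simpl. unfold RL_term.
    replace (1 - al - INR j - 1) with (- al - INR j) by ring.
    assert (Hc := pochfact_pred al j).
    assert (Hp := Rpower_sub_INR_mul (s - a) (1 - al) j ltac:(lra)).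
    transitivity ((pochfact (al - 1) j * (al - 1 + INR j))
                    * - (Rpower (s - a) (- al - INR j) * moment j s)
      + pochfact (al - 1) j * (Rpower (s - a) (1 - al - INR j) * (s - a) ^ j) * y_ext s); [ring|].
    rewrite Hc, Hp. ring. }
  unfold frac_int_approx, frac_int_approx_deriv. induction N as [|N IH].
  - apply (is_derive_ext (fun s => pochfact (al - 1) 0 * Rpower (s - a) (1 - al - INR 0) * moment 0 s)).
    { intros t. now rewrite sum_O. }
    eapply is_derive_eq; [apply Hterm|].
    rewrite sum_O, !pochfact_0. reflexivity.
  - apply (is_derive_ext (fun s =>
      sum_n (fun j => pochfact (al - 1) j * Rpower (s - a) (1 - al - INR j) * moment j s) N
      + pochfact (al - 1) (S N) * Rpower (s - a) (1 - al - INR (S N)) * moment (S N) s)).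
    { intros t. now rewrite sum_Sn. }
    eapply is_derive_eq; [apply (is_derive_plus _ _ _ _ _ IH (Hterm (S N)))|].
    rewrite sum_Sn, (pochfact_succ_pred_sum al N). unfold plus; simpl. ring.
Qed.

Lemma moment_bound j s K : a <= s -> (forall u, Rabs (y_ext u) <= K) ->
  Rabs (moment j s) <= K * (s - a) ^ S j / INR (S j).
Proof.
  intros Hs HK. unfold moment.
  assert (HSj : 0 < INR (S j)) by (apply lt_0_INR; lia).
  assert (HI : is_RInt (fun u => K * (u - a) ^ j) a s (K / INR (S j) * (s - a) ^ S j)).
  { replace (K / INR (S j) * (s - a) ^ S j)
      with (minus (K / INR (S j) * (s - a) ^ S j) (K / INR (S j) * (a - a) ^ S j)).
    2:{ rewrite Rminus_diag, pow_i by lia. unfold minus, plus, opp; cbn -[INR pow]. ring. }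
    apply (is_RInt_derive (fun u => K / INR (S j) * (u - a) ^ S j)).
    - intros z _.
      assert (Hl : is_derive (fun u => u - a) z 1) by (auto_derive; auto; ring).
      eapply is_derive_eq; [apply is_derive_scal, is_derive_pow, Hl|].
      cbn -[INR pow]. unfold scal, mult; cbn -[INR pow]. field. lra.
    - intros z _. apply (ex_derive_continuous (fun u => K * (u - a) ^ j)). auto_derive. auto. }
  replace (K * (s - a) ^ S j / INR (S j)) with (K / INR (S j) * (s - a) ^ S j) by (unfold Rdiv; ring).
  eapply Rle_trans;
    [apply abs_RInt_le; [exact Hs|apply ex_RInt_continuous_R, continuous_moment_integrand]|].
  rewrite <- (is_RInt_unique _ _ _ _ HI).
  apply RInt_le; [exact Hs| |eexists; exact HI|].
  - apply ex_RInt_continuous_R. intros z.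
    apply (continuous_comp (fun u => (u - a) ^ j * y_ext u) Rabs);
      [apply continuous_moment_integrand|apply continuous_Rabs].
  - intros z Hz. rewrite Rabs_mult, Rabs_right by (apply Rle_ge, pow_le; lra).
    rewrite Rmult_comm. apply Rmult_le_compat_r; [apply pow_le; lra|apply HK].
Qed.

Lemma RL_term_bound s K j : a < s -> (forall u, Rabs (y_ext u) <= K) ->
  Rabs (RL_term s j) <= K * Rpower (s - a) (1 - al) / (1 - al) * (- pochfact (al - 1) (S j)).
Proof.
  intros Hs HK. unfold RL_term.
  assert (HM := moment_bound j s K ltac:(lra) HK).
  assert (Hc := pochfact_pos al j (proj1 Hal)).
  assert (HR := Rpower_pos (s - a) (- al - INR j)).
  assert (HSj : 0 < INR (S j)) by (apply lt_0_INR; lia).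
  rewrite !Rabs_mult, (Rabs_right (pochfact al j)), (Rabs_right (Rpower _ _)) by lra.
  eapply Rle_trans; [apply Rmult_le_compat_l; [apply Rmult_le_pos; lra|exact HM]|].
  rewrite pochfact_pred_succ.
  replace (- al - INR j) with (1 - al - INR (S j)) by (rewrite S_INR; ring).
  replace (pochfact al j * Rpower (s - a) (1 - al - INR (S j)) * (K * (s - a) ^ S j / INR (S j)))
    with (pochfact al j * K / INR (S j) * (Rpower (s - a) (1 - al - INR (S j)) * (s - a) ^ S j))
    by (field; lra).
  rewrite Rpower_sub_INR_mul by lra. right. field. lra.
Qed.

Lemma frac_int_approx_deriv_bound s K N : a < s -> 0 <= K -> (forall u, Rabs (y_ext u) <= K) ->
  Rabs ((1 - al) * Series (RL_term s) - frac_int_approx_deriv N s)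
    <= 2 * K * Rpower (s - a) (1 - al) * pochfact al N.
Proof.
  intros Hs HK0 HK.
  assert (HRp := Rpower_pos (s - a) (1 - al)).
  destruct (series_dominated_tail al (RL_term s) (K * Rpower (s - a) (1 - al) / (1 - al)) Hal)
    as [_ Ht].
  { apply Rdiv_le_0_compat; [apply Rmult_le_pos|]; lra. }
  { intros j. apply RL_term_bound; assumption. }
  specialize (Ht N). unfold frac_int_approx_deriv.
  replace ((1 - al) * Series (RL_term s)
           - ((1 - al) * sum_n (RL_term s) N + pochfact al N * Rpower (s - a) (1 - al) * y_ext s))
    with ((1 - al) * (Series (RL_term s) - sum_n (RL_term s) N)
          - pochfact al N * Rpower (s - a) (1 - al) * y_ext s) by ring.
  eapply Rle_trans; [apply Rabs_triang|]. rewrite Rabs_Ropp, !Rabs_mult.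
  assert (Hc := pochfact_pos al N (proj1 Hal)).
  rewrite (Rabs_right (1 - al)), (Rabs_right (pochfact al N)), (Rabs_right (Rpower _ _)) by lra.
  assert (Hd := pochfact_succ_le al N Hal).
  apply Rle_trans with ((1 - al) * (K * Rpower (s - a) (1 - al) / (1 - al) * pochfact al (S N))
                        + pochfact al N * Rpower (s - a) (1 - al) * K).
  - apply Rplus_le_compat; [apply Rmult_le_compat_l; [lra|exact Ht]|].
    apply Rmult_le_compat_l; [apply Rmult_le_pos; lra|apply HK].
  - replace ((1 - al) * (K * Rpower (s - a) (1 - al) / (1 - al) * pochfact al (S N)))
      with (K * Rpower (s - a) (1 - al) * pochfact al (S N)) by (field; lra).
    assert (K * Rpower (s - a) (1 - al) * pochfact al (S N)
            <= K * Rpower (s - a) (1 - al) * pochfact al N)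
      by (apply Rmult_le_compat_l; [apply Rmult_le_pos|]; lra).
    lra.
Qed.

(* The approximants converge to [frac_int] and their derivatives converge uniformly
   near [t], with errors controlled by [pochfact al N -> 0]. *)
Lemma derivable_frac_int t : a < t ->
  derivable_pt_lim frac_int t ((1 - al) * Series (RL_term t)).
Proof.
  intros Ht.
  destruct y_ext_bounded as [K [HK0 HK]].
  set (r := mkposreal _ (ltac:(lra) : 0 < (t - a) / 2)).
  assert (Hball : forall s, Boule t r s -> a + (t - a) / 2 < s < t + (t - a) / 2).
  { intros s Hs. unfold Boule in Hs. simpl in Hs. apply Rabs_lt_between in Hs. lra. }
  assert (Hlim := is_lim_pochfact_0 al Hal).
  apply (CVU_derivable frac_int_approx frac_int_approx_deriv frac_int
           (fun s => (1 - al) * Series (RL_term s)) t r).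
  - intros eps Heps.
    set (C := 2 * K * Rpower (3 * ((t - a) / 2)) (1 - al)).
    assert (HC : 0 <= C) by (unfold C; assert (H := Rpower_pos (3 * ((t - a) / 2)) (1 - al)); nra).
    apply is_lim_seq_Reals in Hlim.
    destruct (Hlim (eps / (C + 1))) as [N0 HN0]; [apply Rdiv_lt_0_compat; lra|].
    exists N0. intros m s Hm Hs. apply Hball in Hs.
    specialize (HN0 m Hm). unfold Rdist in HN0. rewrite Rminus_0_r in HN0.
    assert (Hcm := pochfact_pos al m (proj1 Hal)). rewrite Rabs_right in HN0 by lra.
    eapply Rle_lt_trans; [apply (frac_int_approx_deriv_bound s K m); auto; lra|].
    assert (HRs : Rpower (s - a) (1 - al) <= Rpower (3 * ((t - a) / 2)) (1 - al))
      by (apply Rle_Rpower_l; lra).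
    apply Rle_lt_trans with (C * pochfact al m).
    + apply Rmult_le_compat_r; [lra|]. unfold C. apply Rmult_le_compat_l; lra.
    + apply (Rmult_lt_compat_l (C + 1)) in HN0; [|lra].
      replace ((C + 1) * (eps / (C + 1))) with eps in HN0 by (field; lra). nra.
  - intros s Hs. apply Hball in Hs. apply is_lim_seq_Reals.
    apply (is_lim_seq_of_bound _ (pochfact al) _ ((s - a) * Rpower (s - a) (1 - al) * K));
      [|exact Hlim].
    intros N. rewrite Rabs_minus_sym. eapply Rle_trans; [apply frac_int_approx_bound; auto; lra|].
    right. ring.
  - intros m s Hs. apply Hball in Hs. apply is_derive_Reals, is_derive_frac_int_approx. lra.
  - unfold Boule. rewrite Rminus_diag, Rabs_R0. apply cond_pos.
Qed.

Lemma RL_deriv_C1 t : a < t <= b ->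
  deriv_in a b (RL_integral a al x) t (x a * Rpower (t - a) (- al) + Series (RL_term t)).
Proof.
  intros Ht.
  apply (deriv_in_locally_ext a b _
           (fun s => / (1 - al) * (x a * Rpower (s - a) (1 - al) + frac_int s))).
  - apply is_derive_Reals.
    eapply is_derive_eq.
    + apply is_derive_scal, (is_derive_plus (fun s => x a * Rpower (s - a) (1 - al)) frac_int).
      * apply is_derive_scal, is_derive_Rpower_sub_l. lra.
      * apply is_derive_Reals, derivable_frac_int. lra.
    + unfold plus, scal; simpl. unfold mult; simpl.
      replace (1 - al - 1) with (- al) by ring. field. lra.
  - exists (t - a). split; [lra|]. intros u Hu Hut. apply Rabs_lt_between in Hut.
    apply RL_integral_eq. lra.
  - lra.
Qed.

Lemma moment_by_parts k t : a < t <= b ->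
  INR (S k) * RInt (fun u => (u - a) ^ k * x u) a t = (t - a) ^ S k * x t - moment (S k) t.
Proof.
  intros Ht.
  assert (Hcx : forall z, continuous (fun u => (u - a) ^ k * x_int u) z).
  { intros z. apply (continuous_mult (fun u => (u - a) ^ k) x_int); [|apply continuous_x_int].
    apply (ex_derive_continuous (fun u => (u - a) ^ k)). auto_derive. auto. }
  rewrite (RInt_ext_R _ (fun u => (u - a) ^ k * x_int u)).
  2:{ intros u Hu. rewrite Rmin_left, Rmax_right in Hu by lra. rewrite x_eq_x_int by lra. reflexivity. }
  rewrite x_eq_x_int by lra.
  assert (HI : is_RInt (fun u => INR (S k) * ((u - a) ^ k * x_int u) + (u - a) ^ S k * y_ext u) a t
                 (minus ((t - a) ^ S k * x_int t) ((a - a) ^ S k * x_int a))).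
  { apply (is_RInt_derive (fun u => (u - a) ^ S k * x_int u)).
    - intros z _. assert (Hl : is_derive (fun u => u - a) z 1) by (auto_derive; auto; ring).
      eapply is_derive_eq.
      + apply (is_derive_mult (fun u => (u - a) ^ S k) x_int);
          [apply is_derive_pow, Hl|apply is_derive_x_int|apply Rmult_comm].
      + unfold plus, mult; cbn -[INR pow]. ring.
    - intros z _.
      apply (continuous_plus (fun u => INR (S k) * ((u - a) ^ k * x_int u))
                             (fun u => (u - a) ^ S k * y_ext u)).
      + apply (continuous_mult (fun _ => INR (S k))); [apply continuous_const|apply Hcx].
      + apply continuous_moment_integrand. }
  apply (is_RInt_unique (V := R_CompleteNormedModule)) in HI.
  rewrite RInt_plus_R, RInt_scal_R in HI.
  - unfold moment. rewrite Rminus_diag, pow_i in HI by lia.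
    unfold minus, plus, opp in HI. cbn -[pow INR RInt] in HI. lra.
  - apply ex_RInt_continuous_R, Hcx.
  - apply ex_RInt_continuous_R. intros z.
    apply (continuous_mult (fun _ => INR (S k))); [apply continuous_const|apply Hcx].
  - apply ex_RInt_continuous_R, continuous_moment_integrand.
Qed.

Lemma ex_series_RL_term t : a < t -> ex_series (RL_term t).
Proof.
  intros Ht. destruct y_ext_bounded as [K [HK0 HK]].
  assert (HRp := Rpower_pos (t - a) (1 - al)).
  apply (series_dominated_tail al (RL_term t) (K * Rpower (t - a) (1 - al) / (1 - al)) Hal).
  - apply Rdiv_le_0_compat; [apply Rmult_le_pos|]; lra.
  - intros j. apply RL_term_bound; assumption.
Qed.

Lemma RL_term_0 t : a < t <= b -> RL_term t 0 = Rpower (t - a) (- al) * (x t - x a).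
Proof.
  intros Ht. unfold RL_term, moment. rewrite pochfact_0, x_eq_x_int by lra. unfold x_int.
  replace (- al - INR 0) with (- al) by (simpl; ring).
  rewrite (RInt_ext_R _ y_ext); [ring|]. intros z _. simpl. ring.
Qed.

End RL_derivative_C1.

Lemma cont_in_ext a b f g s : (forall u, a <= u <= b -> f u = g u) -> a <= s <= b ->
  cont_in a b f s -> cont_in a b g s.
Proof.
  intros Hfg Hs H. unfold cont_in. rewrite <- (Hfg s Hs).
  apply (filterlim_ext_loc f); [|exact H].
  exists (mkposreal 1 Rlt_0_1). intros u _ Hu. apply Hfg, Hu.
Qed.

Lemma Cn_derivs_C1 a b n x d : a < b -> (1 <= n)%nat -> Cn_derivs a b n x d ->
  (forall s, a <= s <= b -> cont_in a b x s) /\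
  (forall s, a < s < b -> is_derive x s (d 1%nat s)) /\
  (forall s, a <= s <= b -> cont_in a b (d 1%nat) s).
Proof.
  intros Hab Hn [H0 [H1 H2]]. split; [|split].
  - intros s Hs. apply (cont_in_ext a b (d 0%nat)); [exact H0|exact Hs|apply H2; [lia|exact Hs]].
  - intros s Hs. apply (is_derive_ext_loc (d 0%nat)).
    + assert (Hr : 0 < Rmin (s - a) (b - s)) by (apply Rmin_pos; lra).
      exists (mkposreal _ Hr). intros v Hv. apply ball_R_between in Hv. simpl in Hv.
      assert (H3 := Rmin_l (s - a) (b - s)). assert (H4 := Rmin_r (s - a) (b - s)).
      apply H0. lra.
    + apply (is_derive_of_deriv_in a b); [apply H1|]; lia || lra.
  - intros s Hs. apply H2; [lia|exact Hs].
Qed.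

Lemma A_term_eq n al i q : 0 < al < 1 -> (1 <= i <= n - 1)%nat ->
  A_term n al i q = pochfact (al - INR i) (S q).
Proof.
  intros Hal Hi. unfold A_term, pochfact.
  replace (INR (q + (n - i)) - INR n + 1 + al) with (al - INR i + INR (S q))
    by (rewrite plus_INR, minus_INR, S_INR by lia; ring).
  replace (q + (n - i) + i + 1 - n)%nat with (S q) by lia.
  rewrite Gamma_shift by exact Hal.
  replace (al - INR i) with (al - INR i + INR 0) at 3 by (simpl; ring).
  rewrite Gamma_shift by exact Hal.
  destruct (is_lim_gauss_seq_Gamma al) as [Hp _]; [lra|].
  assert (Hn := pochhammer_neq0 _ i (not_pole_sub al i Hal)).
  assert (Hf := INR_fact_neq_0 (S q)).
  change (pochhammer (al - INR i) 0) with 1. field. repeat split; auto; lra.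
Qed.

(* The series of A(alpha, i) sums to -1, so every A(alpha, i) vanishes. *)
Lemma is_series_A_term n al i : 0 < al < 1 -> (1 <= i <= n - 1)%nat ->
  is_series (A_term n al i) (-1).
Proof.
  intros Hal Hi.
  assert (H : is_lim_seq (fun Q => pochfact (al - INR (i - 1)) (S Q) - 1) (0 - 1)).
  { apply is_lim_seq_minus'; [|apply is_lim_seq_const].
    apply (is_lim_seq_incr_1 (pochfact (al - INR (i - 1)))), is_lim_pochfact, Hal. }
  replace (0 - 1) with (-1) in H by ring.
  apply (is_lim_seq_ext _ (sum_n (A_term n al i))) in H; [exact H|].
  intros Q. replace (al - INR (i - 1)) with (al - INR i + 1) by (rewrite minus_INR by lia; simpl; ring).
  rewrite <- sum_n_pochfact.
  induction Q as [|Q IH].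
  - rewrite sum_Sn, !sum_O, A_term_eq, pochfact_0 by assumption. unfold plus; simpl. ring.
  - rewrite (sum_Sn (pochfact (al - INR i))), (sum_Sn (A_term n al i)), <- IH, A_term_eq
      by assumption.
    unfold plus; simpl. ring.
Qed.

Lemma B_coef_eq n al k : 0 < al < 1 -> B_coef n al (k + n) = - pochfact al (S k) / Gamma (1 - al).
Proof.
  intros Hal. unfold B_coef, pochfact.
  replace (INR (k + n) - INR n + 1 + al) with (al - INR 0 + INR (S k))
    by (rewrite plus_INR, S_INR; simpl; ring).
  replace (- al) with (1 - al - INR 1 + INR 0) by (simpl; ring).
  replace (1 + al) with (al - INR 0 + INR 1) by (simpl; ring).
  replace (k + n - n + 1)%nat with (S k) by lia.
  rewrite !Gamma_shift by lra.
  destruct (is_lim_gauss_seq_Gamma al) as [Hp _]; [lra|].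
  destruct (is_lim_gauss_seq_Gamma (1 - al)) as [Hq _]; [lra|].
  assert (Hf := INR_fact_neq_0 (S k)). remember (INR (fact (S k))) as F.
  assert (Hk := pochhammer_neq0 _ k (not_pole_sub al 0 Hal)). simpl INR in Hk.
  rewrite Rminus_0_r in Hk.
  simpl INR. rewrite !Rminus_0_r. cbn [pochhammer]. simpl INR.
  field. repeat split; lra.
Qed.

Lemma main_term_eq a b n al x y t k : a < b -> 0 < al < 1 ->
  (forall s, a <= s <= b -> cont_in a b x s) ->
  (forall s, a < s < b -> is_derive x s (y s)) ->
  (forall s, a <= s <= b -> cont_in a b y s) -> a < t <= b ->
  main_term a n al x t k = / Gamma (1 - al) * RL_term a b al y t (S k).
Proof.
  intros Hab Hal Hx Hdx Hy Ht. unfold main_term. cbv zeta.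
  replace (- Gamma (INR (k + n) - INR n + 1 + al) /
             (Gamma (- al) * Gamma (1 + al) * INR (fact (k + n - n + 1))))
    with (- B_coef n al (k + n)) by (unfold B_coef, Rdiv; ring).
  rewrite B_coef_eq by exact Hal.
  unfold V_fun. replace (k + n - n + 1)%nat with (S k) by lia. replace (k + n - n)%nat with k by lia.
  rewrite (moment_by_parts a b x y Hab Hx Hdx Hy k t Ht).
  replace (INR n - 1 - INR (k + n) - al) with (- al - INR (S k)) by (rewrite plus_INR, S_INR; ring).
  unfold RL_term. rewrite Rpower_sub_INR by lra.
  destruct (is_lim_gauss_seq_Gamma (1 - al)) as [Hq _]; [lra|].
  assert ((t - a) ^ S k <> 0) by (apply pow_nonzero; lra).
  field. split; [assumption|lra].
Qed.

Theorem theorem5p3 (a b alpha : R) (n : nat) (x : R -> R) (d : nat -> R -> R) (t : R) :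
  a < b -> 0 < alpha < 1 -> (1 <= n)%nat ->
  Cn_derivs a b n x d ->
  a < t <= b ->
  (forall i, (1 <= i <= n - 1)%nat -> ex_series (A_term n alpha i)) /\
  ex_series (main_term a n alpha x t) /\
  is_RL_deriv a b alpha x t
    (/ Gamma (1 - alpha) * Rpower (t - a) (- alpha) * x t
     + sum_n_m (fun i => A_coef n alpha i * Rpower (t - a) (INR i - alpha) * d i t) 1 (n - 1)
     + Series (main_term a n alpha x t)).
Proof.
  intros Hab Hal Hn Hc Ht.
  destruct (Cn_derivs_C1 a b n x d Hab Hn Hc) as [Hx [Hdx Hy]].
  set (u := RL_term a b alpha (d 1%nat) t).
  assert (Hu : ex_series u) by (apply (ex_series_RL_term a b alpha (d 1%nat) Hab Hal Hy); lra).
  assert (Hmain : forall k, main_term a n alpha x t k = / Gamma (1 - alpha) * u (S k))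
    by (intros k; apply (main_term_eq a b n alpha x (d 1%nat)); assumption).
  assert (HA : forall i, (1 <= i <= n - 1)%nat -> A_coef n alpha i = 0).
  { intros i Hi. unfold A_coef. rewrite (is_series_unique _ _ (is_series_A_term n alpha i Hal Hi)).
    ring. }
  split; [intros i Hi; eexists; exact (is_series_A_term n alpha i Hal Hi)|].
  assert (Hu1 : ex_series (fun k => u (S k))) by exact (proj1 (ex_series_incr_1 u) Hu).
  split.
  { apply (ex_series_ext (fun k => scal (/ Gamma (1 - alpha)) (u (S k))));
      [intros k; now rewrite Hmain|].
    apply (ex_series_scal_l (K := R_AbsRing) (V := R_NormedModule)), Hu1. }
  exists (x a * Rpower (t - a) (- alpha) + Series u). split.
  { apply (RL_deriv_C1 a b alpha x (d 1%nat)); assumption. }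
  rewrite (sum_n_m_ext_loc _ (fun _ => zero))
    by (intros i Hi; rewrite HA by lia; unfold zero; simpl; ring).
  rewrite sum_n_m_const_zero, (Series_ext _ _ Hmain), Series_scal_l, (Series_incr_1 _ Hu).
  unfold u. rewrite (RL_term_0 a b alpha x (d 1%nat)) by assumption.
  unfold zero; simpl. ring.
Qed.
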